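(* Let $B$ be a Banach left $A$-module having a bounded left approximate identity $(e_\alpha)_\alpha\subseteq A$, and suppose $wap_\ell(B)=B^*$. Then $B^*$ factors on the left with respect to $A$, i.e. $B^*A=B^*$.
   Context: $A$ is a Banach algebra and $B$ a Banach left $A$-module with action $\pi_\ell(a,b)=ab$. A bounded left approximate identity for $B$ is a bounded net $(e_\alpha)\subseteq A$ with $e_\alpha a\to a$ for all $a\in A$ and $e_\alpha b\to b$ for all $b\in B$. For $b'\in B^*$, $a\in A$, $b'a=\pi_\ell^*(b',a)\in B^*$ is $\langle b'a,b\rangle=\langle b',ab\rangle$, and $B^*A=\{b'a:b'\in B^*,a\in A\}$. For a bounded bilinear $m:X\times Y\to Z$: $\langle m^*(z',x),y\rangle=\langle z',m(x,y)\rangle$, $\langle m^{**}(y'',z'),x\rangle=\langle y'',m^*(z',x)\rangle$, $\langle m^{***}(x'',y''),z'\rangle=\langle x'',m^{**}(y'',z')\rangle$; $m^t(y,x)=m(x,y)$, $m^{t***t}(x'',y'')=(m^t)^{***}(y'',x'')$. $wap_\ell(B)=\{b'\in B^*:\langle\pi_\ell^{***}(a'',b''),b'\rangle=\langle\pi_\ell^{t***t}(a'',b''),b'\rangle$ for all $a''\in A^{**},b''\in B^{**}\}$. *)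

From Stdlib Require Import Reals.
Open Scope R_scope.

Record Cx := mkC { Re : R; Im : R }.
Definition C0 : Cx := mkC 0 0.
Definition Cadd (z w : Cx) : Cx := mkC (Re z + Re w) (Im z + Im w).
Definition Cmul (z w : Cx) : Cx :=
  mkC (Re z * Re w - Im z * Im w) (Re z * Im w + Im z * Re w).
Definition Cabs (z : Cx) : R := sqrt (Re z * Re z + Im z * Im z).

Record CBanach := {
  car :> Type;
  vzero : car;
  vadd : car -> car -> car;
  vopp : car -> car;
  vscal : Cx -> car -> car;
  vnorm : car -> R;
  vadd_assoc : forall x y z, vadd x (vadd y z) = vadd (vadd x y) z;
  vadd_comm : forall x y, vadd x y = vadd y x;
  vadd_0 : forall x, vadd x vzero = x;
  vadd_opp : forall x, vadd x (vopp x) = vzero;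
  vscal_1 : forall x, vscal (mkC 1 0) x = x;
  vscal_assoc : forall a b x, vscal a (vscal b x) = vscal (Cmul a b) x;
  vscal_addl : forall a b x, vscal (Cadd a b) x = vadd (vscal a x) (vscal b x);
  vscal_addr : forall a x y, vscal a (vadd x y) = vadd (vscal a x) (vscal a y);
  vnorm_nonneg : forall x, 0 <= vnorm x;
  vnorm_eq0 : forall x, vnorm x = 0 -> x = vzero;
  vnorm_scal : forall a x, vnorm (vscal a x) = Cabs a * vnorm x;
  vnorm_triangle : forall x y, vnorm (vadd x y) <= vnorm x + vnorm y;
  vcomplete : forall u : nat -> car,
    (forall eps, 0 < eps -> exists N, forall m n, (N <= m)%nat -> (N <= n)%nat ->
        vnorm (vadd (u m) (vopp (u n))) < eps) ->
    exists l, forall eps, 0 < eps -> exists N, forall n, (N <= n)%nat ->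
        vnorm (vadd (u n) (vopp l)) < eps
}.

Arguments vzero {c}. Arguments vadd {c}. Arguments vopp {c}.
Arguments vscal {c}. Arguments vnorm {c}.

Definition is_dual (X : CBanach) (f : X -> Cx) : Prop :=
  (forall x y, f (vadd x y) = Cadd (f x) (f y)) /\
  (forall a x, f (vscal a x) = Cmul a (f x)) /\
  (exists M, forall x, Cabs (f x) <= M * vnorm x).

Definition dual_bound (X : CBanach) (f : X -> Cx) (c : R) : Prop :=
  forall x, Cabs (f x) <= c * vnorm x.

Definition is_bidual (X : CBanach) (F : (X -> Cx) -> Cx) : Prop :=
  (forall f g, is_dual X f -> is_dual X g ->
      F (fun x => Cadd (f x) (g x)) = Cadd (F f) (F g)) /\
  (forall a f, is_dual X f -> F (fun x => Cmul a (f x)) = Cmul a (F f)) /\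
  (exists M, forall f c, is_dual X f -> dual_bound X f c -> Cabs (F f) <= M * c).

Section Arens.
Context {X Y Z : Type} (m : X -> Y -> Z).
(* <m^*(z',x), y> = <z', m(x,y)> *)
Definition adj1 (z' : Z -> Cx) (x : X) : Y -> Cx := fun y => z' (m x y).
(* <m^**(y'',z'), x> = <y'', m^*(z',x)> *)
Definition adj2 (y'' : (Y -> Cx) -> Cx) (z' : Z -> Cx) : X -> Cx :=
  fun x => y'' (adj1 z' x).
(* <m^***(x'',y''), z'> = <x'', m^**(y'',z')> *)
Definition adj3 (x'' : (X -> Cx) -> Cx) (y'' : (Y -> Cx) -> Cx) : (Z -> Cx) -> Cx :=
  fun z' => x'' (adj2 y'' z').
End Arens.

Definition flip {X Y Z : Type} (m : X -> Y -> Z) : Y -> X -> Z := fun y x => m x y.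
(* m^{t***t}(x'',y'') = (m^t)^{***}(y'',x'') *)
Definition adj3t {X Y Z : Type} (m : X -> Y -> Z)
  (x'' : (X -> Cx) -> Cx) (y'' : (Y -> Cx) -> Cx) : (Z -> Cx) -> Cx :=
  adj3 (flip m) y'' x''.

Record BanachAlgebra := {
  ba_sp :> CBanach;
  amul : ba_sp -> ba_sp -> ba_sp;
  amul_addl : forall a b c, amul (vadd a b) c = vadd (amul a c) (amul b c);
  amul_addr : forall a b c, amul a (vadd b c) = vadd (amul a b) (amul a c);
  amul_scall : forall t a b, amul (vscal t a) b = vscal t (amul a b);
  amul_scalr : forall t a b, amul a (vscal t b) = vscal t (amul a b);
  amul_assoc : forall a b c, amul a (amul b c) = amul (amul a b) c;
  amul_norm : forall a b, vnorm (amul a b) <= vnorm a * vnorm b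
}.
Arguments amul {b0} _ _ : rename.

Record BanachLeftModule (A : BanachAlgebra) := {
  bm_sp :> CBanach;
  act : A -> bm_sp -> bm_sp;
  act_addl : forall a a' b, act (vadd a a') b = vadd (act a b) (act a' b);
  act_addr : forall a b b', act a (vadd b b') = vadd (act a b) (act a b');
  act_scall : forall t a b, act (vscal t a) b = vscal t (act a b);
  act_scalr : forall t a b, act a (vscal t b) = vscal t (act a b);
  act_assoc : forall a a' b, act a (act a' b) = act (amul a a') b;
  act_norm : forall a b, vnorm (act a b) <= vnorm a * vnorm b
}.
Arguments act {A b} _ _ : rename.

Definition has_bounded_left_approx_identity (A : BanachAlgebra)
  (B : BanachLeftModule A) : Prop :=
  exists (I : Type) (le : I -> I -> Prop) (e : I -> A),
    (exists i : I, True) /\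
    (forall i, le i i) /\
    (forall i j k, le i j -> le j k -> le i k) /\
    (forall i j, exists k, le i k /\ le j k) /\
    (exists M, forall i, vnorm (e i) <= M) /\
    (forall a : A, forall eps, 0 < eps -> exists i0, forall i, le i0 i ->
        vnorm (vadd (amul (e i) a) (vopp a)) < eps) /\
    (forall b : B, forall eps, 0 < eps -> exists i0, forall i, le i0 i ->
        vnorm (vadd (act (e i) b) (vopp b)) < eps).

(* b' a := pi_l^*(b', a), i.e. <b' a, b> = <b', a b> *)
Definition dual_act (A : BanachAlgebra) (B : BanachLeftModule A)
  (b' : B -> Cx) (a : A) : B -> Cx :=
  adj1 (fun (a0 : A) (b0 : B) => act a0 b0) b' a.

Definition in_wap_l (A : BanachAlgebra) (B : BanachLeftModule A) (b' : B -> Cx) : Prop :=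
  is_dual B b' /\
  forall (a'' : (A -> Cx) -> Cx) (b'' : (B -> Cx) -> Cx),
    is_bidual A a'' -> is_bidual B b'' ->
    adj3 (fun (a0 : A) (b0 : B) => act a0 b0) a'' b'' b' =
    adj3t (fun (a0 : A) (b0 : B) => act a0 b0) a'' b'' b'.

(* Cohen's factorization theorem, applied to B^* as a right A-module, reduces the claim to
   showing that B^* is essential: every z is a norm limit of functionals z f with f in the convex
   hull of a tail of (e_i).  Writing x = r^k x_k + x_k y_k and improving (x_k, y_k) one step at a
   time with such an f (and a Neumann series), both sequences converge and x = x_inf a.

   For essentiality, a Hahn-Banach minorant of h |-> limsup Re h(e_i) is a weak* cluster point E
   of (e_i) in A^**, and E(z(. y)) = z(y).  If z stayed at distance > d from the convex set of
   the z f, Mazur-type separation would give F in B^** with Re F(z f) + d <= Re F(z) for all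
   such f.  As z is in wap_l(B), the two Arens products of E and F agree at z, which reads
   E(F(z .)) = F(z); but Re E(F(z .)) <= limsup Re F(z e_i) <= Re F(z) - d. *)

From Stdlib Require Import Reals Lra Lia Psatz Classical ClassicalEpsilon FunctionalExtensionality PropExtensionality.
Open Scope R_scope.

Lemma Cx_ext (z w : Cx) : Re z = Re w -> Im z = Im w -> z = w.
Proof. destruct z, w; simpl; intros; subst; reflexivity. Qed.

Ltac cx := apply Cx_ext; simpl; ring.

Lemma sum_sqr_nonneg x y : 0 <= x*x + y*y.
Proof. pose proof (Rle_0_sqr x); pose proof (Rle_0_sqr y); unfold Rsqr in *; lra. Qed.

Lemma Cabs_nonneg z : 0 <= Cabs z.
Proof. unfold Cabs; apply sqrt_pos. Qed.

Lemma Cabs_Re z : Rabs (Re z) <= Cabs z.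
Proof.
  unfold Cabs. rewrite <- sqrt_Rsqr_abs. apply sqrt_le_1_alt. unfold Rsqr. nra.
Qed.
Lemma Cabs_Im z : Rabs (Im z) <= Cabs z.
Proof.
  unfold Cabs. rewrite <- sqrt_Rsqr_abs. apply sqrt_le_1_alt. unfold Rsqr. nra.
Qed.

Lemma Cabs_real t : Cabs (mkC t 0) = Rabs t.
Proof. unfold Cabs; simpl. rewrite <- sqrt_Rsqr_abs. f_equal. unfold Rsqr; ring. Qed.

Lemma Cabs_mul a b : Cabs (Cmul a b) = Cabs a * Cabs b.
Proof.
  unfold Cabs, Cmul; simpl. rewrite <- sqrt_mult by nra. f_equal. ring.
Qed.

Lemma Cabs_triangle z w : Cabs (Cadd z w) <= Cabs z + Cabs w.
Proof.
  unfold Cabs, Cadd; simpl.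
  destruct z as [a b], w as [c d]; simpl.
  pose proof (sqrt_pos (a*a+b*b)). pose proof (sqrt_pos (c*c+d*d)).
  apply Rsqr_incr_0_var; [| nra].
  rewrite Rsqr_sqrt by apply sum_sqr_nonneg. unfold Rsqr.
  replace ((sqrt (a * a + b * b) + sqrt (c * c + d * d)) *
   (sqrt (a * a + b * b) + sqrt (c * c + d * d))) with
   (sqrt (a*a+b*b) * sqrt (a*a+b*b) + sqrt (c*c+d*d)*sqrt (c*c+d*d)
     + 2 * (sqrt (a*a+b*b) * sqrt (c*c+d*d))) by ring.
  rewrite !sqrt_sqrt by apply sum_sqr_nonneg. rewrite <- sqrt_mult by apply sum_sqr_nonneg.
  assert (a*c+b*d <= sqrt ((a*a+b*b)*(c*c+d*d))).
  { destruct (Rle_or_lt (a*c+b*d) 0). pose proof (sqrt_pos ((a*a+b*b)*(c*c+d*d))); lra.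
    rewrite <- (sqrt_Rsqr (a*c+b*d)) by lra. apply sqrt_le_1_alt. unfold Rsqr.
    pose proof (Rle_0_sqr (a*d-b*c)); unfold Rsqr in *; nra. }
  lra.
Qed.

Lemma Cabs_C0 : Cabs C0 = 0.
Proof. unfold Cabs, C0; simpl. replace (0*0+0*0) with 0 by ring. apply sqrt_0. Qed.

Lemma Cabs_le_sum z : Cabs z <= Rabs (Re z) + Rabs (Im z).
Proof.
  unfold Cabs. destruct z as [a b]; simpl.
  rewrite <- (sqrt_Rsqr (Rabs a + Rabs b)) by (pose proof (Rabs_pos a); pose proof (Rabs_pos b); lra).
  apply sqrt_le_1_alt. unfold Rsqr.
  pose proof (Rabs_pos a); pose proof (Rabs_pos b).
  assert (a*a = Rabs a * Rabs a) by (rewrite <- Rabs_mult; rewrite Rabs_pos_eq; nra).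
  assert (b*b = Rabs b * Rabs b) by (rewrite <- Rabs_mult; rewrite Rabs_pos_eq; nra).
  nra.
Qed.

Lemma Cabs_eq0 z : Cabs z = 0 -> z = C0.
Proof.
  intro H. pose proof (Cabs_Re z). pose proof (Cabs_Im z). rewrite H in *.
  pose proof (Rabs_pos (Re z)); pose proof (Rabs_pos (Im z)).
  apply Cx_ext; simpl. destruct (Req_dec (Re z) 0); auto; exfalso; apply (Rabs_no_R0 _ H4); lra.
  destruct (Req_dec (Im z) 0); auto; exfalso; apply (Rabs_no_R0 _ H4); lra.
Qed.

Lemma Cabs_opp z : Cabs (mkC (- Re z) (- Im z)) = Cabs z.
Proof. unfold Cabs; simpl. f_equal. ring. Qed.

Lemma Cabs_sub_le z w : Cabs w <= Cabs (Cadd z w) + Cabs z.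
Proof.
  replace w with (Cadd (Cadd z w) (mkC (- Re z) (- Im z))) at 1 by cx.
  eapply Rle_trans. apply Cabs_triangle. rewrite Cabs_opp. lra.
Qed.

Definition Csub (z w : Cx) : Cx := mkC (Re z - Re w) (Im z - Im w).

Lemma Csub_tri x y z : Cabs (Csub x z) <= Cabs (Csub x y) + Cabs (Csub y z).
Proof.
  replace (Csub x z) with (Cadd (Csub x y) (Csub y z)) by (unfold Csub; cx). apply Cabs_triangle.
Qed.

Lemma Csub_sym x y : Cabs (Csub x y) = Cabs (Csub y x).
Proof. unfold Cabs, Csub; simpl. f_equal. ring. Qed.

Lemma Csub_self x : Cabs (Csub x x) = 0.
Proof. replace (Csub x x) with C0 by (unfold Csub, C0; cx). apply Cabs_C0. Qed.

Lemma Csub_eq0 x y : Cabs (Csub x y) = 0 -> x = y.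
Proof.
  intro H. apply Cabs_eq0 in H. unfold Csub, C0 in H. injection H; intros.
  apply Cx_ext; lra.
Qed.

Lemma Cx_close z w : (forall eps, 0 < eps -> Cabs (Csub z w) <= eps) -> z = w.
Proof.
  intro H. apply Csub_eq0. apply Rle_antisym; [|apply Cabs_nonneg].
  apply Rnot_lt_le; intro H'. specialize (H (Cabs (Csub z w) / 2) ltac:(lra)). lra.
Qed.

Section NormedSpace.
Variable X : CBanach.
Implicit Types x y z : X.

Lemma vadd_0l x : vadd vzero x = x.
Proof. rewrite vadd_comm; apply vadd_0. Qed.

Lemma vadd_cancel x y z : vadd x y = vadd x z -> y = z.
Proof.
  intro H. assert (vadd (vopp x) (vadd x y) = vadd (vopp x) (vadd x z)) by (rewrite H; auto).
  rewrite !vadd_assoc in H0. rewrite (vadd_comm _ (vopp x) x), vadd_opp, !vadd_0l in H0. exact H0.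
Qed.

Lemma vscal_0 x : vscal C0 x = vzero.
Proof.
  apply (vadd_cancel (vscal C0 x)). rewrite vadd_0, <- vscal_addl.
  f_equal. cx.
Qed.

Lemma vscal_m1 x : vscal (mkC (-1) 0) x = vopp x.
Proof.
  apply (vadd_cancel x). rewrite vadd_opp.
  rewrite <- (vscal_1 X x) at 1. rewrite <- vscal_addl.
  replace (Cadd (mkC 1 0) (mkC (-1) 0)) with C0 by cx. apply vscal_0.
Qed.

Lemma vnorm_0 : vnorm (@vzero X) = 0.
Proof.
  rewrite <- (vscal_0 vzero), vnorm_scal, Cabs_C0. ring.
Qed.

Lemma vnorm_opp x : vnorm (vopp x) = vnorm x.
Proof. rewrite <- vscal_m1, vnorm_scal, Cabs_real. rewrite Rabs_left by lra. ring. Qed.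

Lemma vopp_add x y : vopp (vadd x y) = vadd (vopp x) (vopp y).
Proof. rewrite <- !vscal_m1. apply vscal_addr. Qed.

Lemma vopp_opp x : vopp (vopp x) = x.
Proof. apply (vadd_cancel (vopp x)). rewrite vadd_opp, vadd_comm, vadd_opp. auto. Qed.

Lemma vnorm_sub_sym x y : vnorm (vadd x (vopp y)) = vnorm (vadd y (vopp x)).
Proof.
  rewrite <- vnorm_opp, vopp_add, vopp_opp, vadd_comm. auto.
Qed.

Lemma vnorm_sub_tri x y z :
  vnorm (vadd x (vopp z)) <= vnorm (vadd x (vopp y)) + vnorm (vadd y (vopp z)).
Proof.
  eapply Rle_trans; [| apply vnorm_triangle].
  right. f_equal. rewrite <- !vadd_assoc. f_equal.
  rewrite vadd_assoc, (vadd_comm _ (vopp y) y), vadd_opp, vadd_0l. auto.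
Qed.

Lemma vnorm_scal_real t x : vnorm (vscal (mkC t 0) x) = Rabs t * vnorm x.
Proof. rewrite vnorm_scal, Cabs_real; auto. Qed.

Lemma vnorm_convex t x y : 0 <= t <= 1 ->
  vnorm (vadd (vscal (mkC t 0) x) (vscal (mkC (1-t) 0) y)) <= t * vnorm x + (1-t) * vnorm y.
Proof.
  intro Ht. eapply Rle_trans; [apply vnorm_triangle|].
  rewrite !vnorm_scal_real, !Rabs_pos_eq by lra. lra.
Qed.


Lemma vadd_swap4 (p q r s : X) : vadd (vadd p q) (vadd r s) = vadd (vadd p r) (vadd q s).
Proof.
  rewrite !vadd_assoc. f_equal. rewrite <- !vadd_assoc. f_equal. apply vadd_comm.
Qed.

Lemma vconvex_sub t (a b y : X) :
  vadd (vadd (vscal (mkC t 0) a) (vscal (mkC (1-t) 0) b)) (vopp y) =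
  vadd (vscal (mkC t 0) (vadd a (vopp y))) (vscal (mkC (1-t) 0) (vadd b (vopp y))).
Proof.
  rewrite !vscal_addr, vadd_swap4. f_equal.
  rewrite <- vscal_addl. replace (Cadd (mkC t 0) (mkC (1 - t) 0)) with (mkC 1 0) by cx.
  rewrite vscal_1; auto.
Qed.
Lemma vopp_0 : vopp (@vzero X) = vzero.
Proof. rewrite <- (vadd_0l (vopp vzero)). apply vadd_opp. Qed.
Lemma vscal_zero a : vscal a (@vzero X) = vzero.
Proof.
  replace (@vzero X) with (vscal C0 (@vzero X)) at 1 by apply vscal_0.
  rewrite vscal_assoc. replace (Cmul a C0) with C0 by (unfold C0; cx).
  apply vscal_0.
Qed.

Lemma vadd_right_comm (p q r : X) : vadd (vadd p q) r = vadd (vadd p r) q.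
Proof. rewrite <- !vadd_assoc. f_equal. apply vadd_comm. Qed.

Lemma vaffine_sub r c (y g h : X) : r + c = 1 ->
  vadd (vadd (vadd (vscal (mkC r 0) y) (vscal (mkC c 0) g)) h) (vopp y) =
  vadd (vscal (mkC c 0) (vadd g (vopp y))) h.
Proof.
  intros Hrc.
  assert (E : vopp y = vadd (vscal (mkC r 0) (vopp y)) (vscal (mkC c 0) (vopp y))).
  { rewrite <- vscal_addl. replace (Cadd (mkC r 0) (mkC c 0)) with (mkC 1 0).
    rewrite vscal_1; auto. apply Cx_ext; simpl; lra. }
  rewrite E at 1. rewrite vadd_right_comm, vadd_swap4, <- vscal_addr, vadd_opp, vscal_zero, vadd_0l.
  rewrite vscal_addr. auto.
Qed.
End NormedSpace.

Section DualSpace.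
Variable X : CBanach.

Lemma dual_0 (f : X -> Cx) : is_dual X f -> f vzero = C0.
Proof.
  intros [Ha _]. specialize (Ha vzero vzero). rewrite vadd_0 in Ha.
  destruct (f vzero) as [a b] eqn:E. unfold Cadd in Ha; simpl in Ha. injection Ha; intros.
  unfold C0; f_equal; lra.
Qed.

Lemma dual_opp (f : X -> Cx) x : is_dual X f -> f (vopp x) = mkC (- Re (f x)) (- Im (f x)).
Proof.
  intros Hf. pose proof Hf as [_ [Hs _]]. rewrite <- vscal_m1, Hs. cx.
Qed.

Lemma dual_sub (f : X -> Cx) x y : is_dual X f ->
  f (vadd x (vopp y)) = mkC (Re (f x) - Re (f y)) (Im (f x) - Im (f y)).
Proof.
  intros Hf. pose proof Hf as [Ha _]. rewrite Ha, dual_opp by auto. cx.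
Qed.

Lemma dual_bound_exists (f : X -> Cx) : is_dual X f -> exists M, 0 <= M /\ dual_bound X f M.
Proof.
  intros [_ [_ [M HM]]]. exists (Rabs M). split. apply Rabs_pos.
  intro x. eapply Rle_trans. apply HM. apply Rmult_le_compat_r. apply vnorm_nonneg. apply RRle_abs.
Qed.

Lemma ex_bound (h : X -> Cx) : is_dual X h -> exists c, dual_bound X h c.
Proof. intro H. destruct (dual_bound_exists h H) as [c [_ Hc]]. eauto. Qed.

End DualSpace.

Section Hausdorff.
Variable P : Type.
Variable le : P -> P -> Prop.
Hypothesis le_refl : forall x, le x x.

Definition subset (C D : P -> Prop) := forall x, C x -> D x.
Definition chain (C : P -> Prop) := forall x y, C x -> C y -> le x y \/ le y x.
Definition comparable_all (C : P -> Prop) (x : P) := forall y, C y -> le y x \/ le x y.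

Lemma pred_ext (C D : P -> Prop) : subset C D -> subset D C -> C = D.
Proof.
  intros H1 H2. apply functional_extensionality; intro x.
  apply propositional_extensionality; split; auto.
Qed.

Definition chain_succ (C : P -> Prop) : P -> Prop :=
  match excluded_middle_informative (exists x, ~ C x /\ comparable_all C x) with
  | left H => let x := proj1_sig (constructive_indefinite_description _ H) in
              fun y => C y \/ y = x
  | right _ => C
  end.

Lemma chain_succ_incl C : subset C (chain_succ C).
Proof.
  unfold chain_succ; destruct excluded_middle_informative; intros y Hy; auto.
Qed.

Lemma chain_succ_squeeze C D : subset C D -> subset D (chain_succ C) -> subset D C \/ subset (chain_succ C) D.
Proof.
  intros H1 H2. unfold chain_succ in *. destruct excluded_middle_informative as [H|H].
  - destruct (constructive_indefinite_description _ H) as [x Hx]; simpl in *.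
    destruct (classic (D x)).
    + right. intros y [Hy|Hy]; auto. subst; auto.
    + left. intros y Hy. destruct (H2 y Hy); auto. subst; contradiction.
  - left; auto.
Qed.

Lemma chain_succ_chain C : chain C -> chain (chain_succ C).
Proof.
  intros HC. unfold chain_succ. destruct excluded_middle_informative as [H|H]; auto.
  generalize (proj2_sig (constructive_indefinite_description _ H)).
  generalize (proj1_sig (constructive_indefinite_description _ H)). intros x [_ Hx].
  intros a b [Ha|Ha] [Hb|Hb]; subst; auto;
  try (destruct (Hx _ Ha); auto; fail); try (destruct (Hx _ Hb); auto; fail).
Qed.

(* Zermelo's towers: the least family closed under [chain_succ] and arbitrary unions is
   linearly ordered by inclusion, so its union is a chain that [chain_succ] cannot enlarge. *)
Inductive tower : (P -> Prop) -> Prop :=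
| tower_succ : forall C, tower C -> tower (chain_succ C)
| tower_union : forall F : (P -> Prop) -> Prop, (forall C, F C -> tower C) ->
         tower (fun y => exists C, F C /\ C y).

Definition tower_comparable C := forall D, tower D -> subset D C \/ subset C D.

Lemma tower_succ_comparable C : tower C -> tower_comparable C -> forall D, tower D -> subset D C \/ subset (chain_succ C) D.
Proof.
  intros TC HC D TD. induction TD as [D' TD' IH | F HF IH].
  - destruct IH as [IH|IH].
    + destruct (HC (chain_succ D') (tower_succ _ TD')) as [H|H].
      * left; auto.
      * destruct (chain_succ_squeeze D' C IH H) as [H'|H'].
        -- right. assert (C = D') by (apply pred_ext; auto). subst. intros y Hy; auto.
        -- left; auto.
    + right. intros y Hy. apply chain_succ_incl. auto.
  - destruct (classic (forall E, F E -> subset E C)) as [H|H].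
    + left. intros y [E [HE Hy]]. eapply H; eauto.
    + right. apply not_all_ex_not in H. destruct H as [E HE].
      apply imply_to_and in HE. destruct HE as [HE1 HE2].
      destruct (IH E HE1) as [H|H]. contradiction.
      intros y Hy. exists E; split; auto.
Qed.

Lemma towers_comparable C : tower C -> tower_comparable C.
Proof.
  intro TC. induction TC as [C' TC' IH | F HF IH].
  - intros D TD. destruct (tower_succ_comparable C' TC' IH D TD) as [H|H].
    + left. intros y Hy. apply chain_succ_incl; auto.
    + right; auto.
  - intros D TD. destruct (classic (forall E, F E -> subset E D)) as [H|H].
    + right. intros y [E [HE Hy]]. eapply H; eauto.
    + left. apply not_all_ex_not in H. destruct H as [E HE].
      apply imply_to_and in HE. destruct HE as [HE1 HE2].
      destruct (IH E HE1 D TD) as [H|H].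
      * intros y Hy. exists E; split; auto.
      * contradiction.
Qed.

Lemma tower_chain C : tower C -> chain C.
Proof.
  intro TC. induction TC as [C' TC' IH | F HF IH].
  - apply chain_succ_chain; auto.
  - intros a b [E1 [H1 Ha]] [E2 [H2 Hb]].
    destruct (towers_comparable E1 (HF E1 H1) E2 (HF E2 H2)) as [H|H].
    + apply (IH E1 H1); auto.
    + apply (IH E2 H2); auto.
Qed.

Theorem hausdorff_maximal : exists M : P -> Prop, chain M /\ forall x, comparable_all M x -> M x.
Proof.
  set (M := fun y => exists C, tower C /\ C y).
  assert (TM : tower M) by (apply tower_union; auto).
  exists M. split. apply tower_chain; auto.
  intros x Hx. apply NNPP; intro Hn.
  assert (subset (chain_succ M) M).
  { intros y Hy. exists (chain_succ M). split; auto. apply tower_succ; auto. }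
  unfold chain_succ in H. destruct excluded_middle_informative as [H1|H1].
  - revert H. generalize (proj2_sig (constructive_indefinite_description _ H1)).
    generalize (proj1_sig (constructive_indefinite_description _ H1)). intros z [Hz1 Hz2] H.
    apply Hz1. apply H. right; auto.
  - apply H1. exists x; auto.
Qed.

End Hausdorff.

(* Junk value 0 when E is empty or unbounded above. *)
Definition Rsup (E : R -> Prop) : R :=
  match excluded_middle_informative (bound E /\ exists x, E x) with
  | left H => proj1_sig (completeness E (proj1 H) (proj2 H))
  | right _ => 0 end.

Lemma Rsup_spec E : bound E -> (exists x, E x) -> is_lub E (Rsup E).
Proof.
  intros H1 H2. unfold Rsup. destruct excluded_middle_informative as [H|H].
  - apply (proj2_sig (completeness E (proj1 H) (proj2 H))).
  - exfalso; auto.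
Qed.

Definition Rinf (E : R -> Prop) : R := - Rsup (fun r => E (- r)).

Lemma Rinf_lb E r m : E r -> (forall r', E r' -> m <= r') -> Rinf E <= r.
Proof.
  intros Hr Hm. unfold Rinf.
  destruct (Rsup_spec (fun r => E (-r))) as [H1 H2].
  - exists (-m). intros x Hx. specialize (Hm _ Hx). lra.
  - exists (-r). rewrite Ropp_involutive; auto.
  - assert (-r <= Rsup (fun r => E (-r))). apply H1. rewrite Ropp_involutive; auto. lra.
Qed.

Lemma Rinf_glb E m : (exists r, E r) -> (forall r', E r' -> m <= r') -> m <= Rinf E.
Proof.
  intros [r Hr] Hm. unfold Rinf.
  destruct (Rsup_spec (fun r => E (-r))) as [H1 H2].
  - exists (-m). intros x Hx. specialize (Hm _ Hx). lra.
  - exists (-r). rewrite Ropp_involutive; auto.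
  - assert (Rsup (fun r => E (-r)) <= -m). apply H2. intros x Hx. specialize (Hm _ Hx). lra. lra.
Qed.

Definition fadd {T} (f g : T -> Cx) : T -> Cx := fun x => Cadd (f x) (g x).
Definition fsc {T} (t : R) (f : T -> Cx) : T -> Cx := fun x => mkC (t * Re (f x)) (t * Im (f x)).
Definition fzero {T} : T -> Cx := fun _ => C0.

Ltac fx := apply functional_extensionality; intro; apply Cx_ext;
  unfold fadd, fsc, fzero, Cadd, C0; simpl.

Section HahnBanach.
Variable T : Type.
Notation V := (T -> Cx).
Variable S : V -> Prop.
Variable p : V -> R.
Hypothesis S0 : S fzero.
Hypothesis Sadd : forall u v, S u -> S v -> S (fadd u v).
Hypothesis Ssc : forall t u, S u -> S (fsc t u).
Hypothesis padd : forall u v, S u -> S v -> p (fadd u v) <= p u + p v.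
Hypothesis psc : forall t u, 0 < t -> S u -> p (fsc t u) = t * p u.

Lemma sublinear_zero : p fzero = 0.
Proof.
  assert (fsc 2 fzero = (@fzero T)) by (fx; ring).
  pose proof (psc 2 fzero ltac:(lra) S0). rewrite H in H0. lra.
Qed.

Record pminorant := mkPMinorant {
  dom : V -> Prop;
  val : V -> R;
  dom_S : forall u, dom u -> S u;
  dom_0 : dom fzero;
  dom_add : forall u v, dom u -> dom v -> dom (fadd u v);
  dom_sc : forall t u, dom u -> dom (fsc t u);
  val_add : forall u v, dom u -> dom v -> val (fadd u v) = val u + val v;
  val_sc : forall t u, dom u -> val (fsc t u) = t * val u;
  val_le : forall u, dom u -> val u <= p u
}.

Definition pminorant_le (q1 q2 : pminorant) :=
  (forall u, dom q1 u -> dom q2 u) /\ (forall u, dom q1 u -> val q1 u = val q2 u).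

Lemma pminorant_le_refl q : pminorant_le q q.
Proof. split; auto. Qed.

Lemma pminorant_le_trans q1 q2 q3 : pminorant_le q1 q2 -> pminorant_le q2 q3 -> pminorant_le q1 q3.
Proof.
  intros [A1 B1] [A2 B2]. split; auto. intros u Hu. rewrite B1, B2; auto.
Qed.

Lemma fsc_zero t : fsc t (@fzero T) = fzero.
Proof. fx; ring. Qed.
Lemma fadd_zero : fadd (@fzero T) fzero = fzero.
Proof. fx; ring. Qed.

Definition pminorant_zero : pminorant.
Proof.
  refine (mkPMinorant (fun u => u = fzero) (fun _ => 0) _ _ _ _ _ _ _).
  - intros; subst; auto.
  - auto.
  - intros; subst; apply fadd_zero.
  - intros; subst; apply fsc_zero.
  - intros; ring.
  - intros; ring.
  - intros; subst; rewrite sublinear_zero; lra.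
Defined.

Section ChainUnion.
Variable M : pminorant -> Prop.
Hypothesis Mchain : chain pminorant pminorant_le M.
Variable q0 : pminorant.
Hypothesis Mq0 : M q0.

Definition union_dom (u : V) := exists q, M q /\ dom q u.
Definition union_val (u : V) : R :=
  match excluded_middle_informative (union_dom u) with
  | left H => val (proj1_sig (constructive_indefinite_description _ H)) u
  | right _ => 0 end.

Lemma union_val_spec q u : M q -> dom q u -> union_val u = val q u.
Proof.
  intros Hq Hu. unfold union_val. destruct excluded_middle_informative as [H|H].
  - destruct (constructive_indefinite_description _ H) as [q' [Hq' Hu']]; simpl.
    destruct (Mchain q' q Hq' Hq) as [[_ B]|[_ B]]; auto. symmetry; auto.
  - exfalso; apply H; exists q; auto.
Qed.

Lemma union_dom2 u v : union_dom u -> union_dom v -> exists q, M q /\ dom q u /\ dom q v.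
Proof.
  intros [q1 [H1 D1]] [q2 [H2 D2]].
  destruct (Mchain q1 q2 H1 H2) as [[A _]|[A _]].
  - exists q2; auto.
  - exists q1; auto.
Qed.

Definition pminorant_union : pminorant.
Proof.
  refine (mkPMinorant union_dom union_val _ _ _ _ _ _ _).
  - intros u [q [_ Hq]]. eapply dom_S; eauto.
  - exists q0; split; auto. apply dom_0.
  - intros u v Hu Hv. destruct (union_dom2 u v Hu Hv) as [q [Hq [A B]]].
    exists q; split; auto. apply dom_add; auto.
  - intros t u [q [Hq A]]. exists q; split; auto. apply dom_sc; auto.
  - intros u v Hu Hv. destruct (union_dom2 u v Hu Hv) as [q [Hq [A B]]].
    rewrite !(union_val_spec q); auto. apply val_add; auto. apply dom_add; auto.
  - intros t u [q [Hq A]]. rewrite !(union_val_spec q); auto. apply val_sc; auto. apply dom_sc; auto.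
  - intros u [q [Hq A]]. rewrite (union_val_spec q); auto. apply val_le; auto.
Defined.

Lemma pminorant_union_ub q : M q -> pminorant_le q pminorant_union.
Proof.
  intro Hq. split.
  - intros u Hu. exists q; auto.
  - intros u Hu. simpl. symmetry. apply union_val_spec; auto.
Qed.
End ChainUnion.

Section OneStepExtension.
Variable q : pminorant.
Variable x : V.
Hypothesis Sx : S x.
Hypothesis nx : ~ dom q x.

Definition ext_lower (r : R) := exists y, dom q y /\ r = val q y - p (fadd y (fsc (-1) x)).

Lemma ext_lower_bound y' : dom q y' -> forall r, ext_lower r -> r <= p (fadd y' x) - val q y'.
Proof.
  intros Hy' r [y [Hy ->]].
  assert (fadd y y' = fadd (fadd y (fsc (-1) x)) (fadd y' x)) by (fx; ring).
  pose proof (val_le q (fadd y y') (dom_add q _ _ Hy Hy')).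
  rewrite val_add in H0 by auto. rewrite H in H0.
  pose proof (padd (fadd y (fsc (-1) x)) (fadd y' x)).
  assert (S y) by (eapply dom_S; eauto). assert (S y') by (eapply dom_S; eauto).
  specialize (H1 (Sadd _ _ H2 (Ssc _ _ Sx)) (Sadd _ _ H3 Sx)). lra.
Qed.

(* Any value between sup [ext_lower] and inf_y (p (y + x) - val y) extends the minorant to x. *)
Definition ext_value : R := Rsup ext_lower.

Lemma ext_value_spec : is_lub ext_lower ext_value.
Proof.
  apply Rsup_spec.
  - exists (p (fadd fzero x) - val q fzero). intros r Hr. apply (ext_lower_bound fzero (dom_0 q)); auto.
  - eexists. exists fzero. split. apply dom_0. reflexivity.
Qed.

Lemma ext_value_lb y : dom q y -> val q y - p (fadd y (fsc (-1) x)) <= ext_value.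
Proof. intro Hy. apply (proj1 ext_value_spec). exists y; auto. Qed.

Lemma ext_value_ub y : dom q y -> ext_value <= p (fadd y x) - val q y.
Proof. intro Hy. apply (proj2 ext_value_spec). intros r Hr. apply (ext_lower_bound y Hy); auto. Qed.

Definition ext_dom (w : V) := exists yt : V * R, dom q (fst yt) /\ w = fadd (fst yt) (fsc (snd yt) x).

Lemma ext_rep_unique y t y' t' : dom q y -> dom q y' ->
  fadd y (fsc t x) = fadd y' (fsc t' x) -> y = y' /\ t = t'.
Proof.
  intros Hy Hy' E.
  destruct (Req_dec t t') as [Ht|Ht].
  - subst t'. split; auto. apply functional_extensionality; intro b.
    assert (E1 := f_equal (fun f => f b) E). simpl in E1. unfold fadd, fsc, Cadd in E1.
    injection E1; intros. apply Cx_ext; lra.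
  - exfalso. apply nx.
    assert (x = fsc (/ (t - t')) (fadd y' (fsc (-1) y))).
    { apply functional_extensionality; intro b.
      assert (E1 := f_equal (fun f => f b) E). simpl in E1. unfold fadd, fsc, Cadd in E1.
      injection E1; intros. apply Cx_ext; unfold fadd, fsc, Cadd; simpl.
      apply (Rmult_eq_reg_l (t - t')); [|lra]. field_simplify; [|lra]. lra.
      apply (Rmult_eq_reg_l (t - t')); [|lra]. field_simplify; [|lra]. lra. }
    rewrite H. apply dom_sc, dom_add; auto. apply dom_sc; auto.
Qed.

Definition ext_val (w : V) : R :=
  match excluded_middle_informative (ext_dom w) with
  | left H => let yt := proj1_sig (constructive_indefinite_description _ H) in
              val q (fst yt) + snd yt * ext_value
  | right _ => 0 end.

Lemma ext_val_spec y t : dom q y -> ext_val (fadd y (fsc t x)) = val q y + t * ext_value.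
Proof.
  intro Hy. unfold ext_val. destruct excluded_middle_informative as [H|H].
  - destruct (constructive_indefinite_description _ H) as [[y' t'] [H1 H2]]; simpl.
    simpl in *. destruct (ext_rep_unique y t y' t' Hy H1 H2). subst; auto.
  - exfalso; apply H. exists (y, t); auto.
Qed.

Lemma ext_dom_S w : ext_dom w -> S w.
Proof. intros [[y t] [Hy ->]]. simpl in *. apply Sadd; auto. eapply dom_S; eauto. Qed.

Lemma ext_val_le y t : dom q y -> val q y + t * ext_value <= p (fadd y (fsc t x)).
Proof.
  intro Hy. assert (Sy : S y) by (eapply dom_S; eauto).
  destruct (Rtotal_order t 0) as [Ht|[Ht|Ht]].
  - set (s := - t). assert (0 < s) by (unfold s; lra).
    pose proof (ext_value_lb (fsc (/ s) y) (dom_sc _ _ _ Hy)).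
    rewrite val_sc in H0 by auto.
    assert (fadd y (fsc t x) = fsc s (fadd (fsc (/ s) y) (fsc (-1) x))).
    { fx; unfold s; field; lra. }
    rewrite H1, psc by (auto; apply Sadd; apply Ssc; auto).
    apply (Rmult_le_compat_l s) in H0; [|lra].
    replace (s * (/ s * val q y - p (fadd (fsc (/ s) y) (fsc (-1) x)))) with
      (val q y - s * p (fadd (fsc (/ s) y) (fsc (-1) x))) in H0 by (field; lra).
    unfold s in *. lra.
  - subst. assert (fadd y (fsc 0 x) = y) by (fx; ring). rewrite H.
    pose proof (val_le q y Hy). lra.
  - pose proof (ext_value_ub (fsc (/ t) y) (dom_sc _ _ _ Hy)).
    rewrite val_sc in H by auto.
    assert (fadd y (fsc t x) = fsc t (fadd (fsc (/ t) y) x)).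
    { fx; field; lra. }
    rewrite H0, psc by (auto; apply Sadd; auto).
    apply (Rmult_le_compat_l t) in H; [|lra].
    replace (t * (p (fadd (fsc (/ t) y) x) - / t * val q y)) with
      (t * p (fadd (fsc (/ t) y) x) - val q y) in H by (field; lra). lra.
Qed.

Definition pminorant_extend : pminorant.
Proof.
  refine (mkPMinorant ext_dom ext_val ext_dom_S _ _ _ _ _ _).
  - exists (fzero, 0). simpl. split. apply dom_0. fx; ring.
  - intros u v [[y t] [Hy ->]] [[y' t'] [Hy' ->]]. simpl in *.
    exists (fadd y y', t + t'). simpl. split. apply dom_add; auto. fx; ring.
  - intros s u [[y t] [Hy ->]]. simpl in *.
    exists (fsc s y, s * t). simpl. split. apply dom_sc; auto. fx; ring.
  - intros u v [[y t] [Hy ->]] [[y' t'] [Hy' ->]]. simpl in *.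
    replace (fadd (fadd y (fsc t x)) (fadd y' (fsc t' x))) with (fadd (fadd y y') (fsc (t+t') x)) by (fx; ring).
    rewrite !ext_val_spec; auto. rewrite val_add; auto. ring. apply dom_add; auto.
  - intros s u [[y t] [Hy ->]]. simpl in *.
    replace (fsc s (fadd y (fsc t x))) with (fadd (fsc s y) (fsc (s*t) x)) by (fx; ring).
    rewrite !ext_val_spec; auto. rewrite val_sc; auto. ring. apply dom_sc; auto.
  - intros u [[y t] [Hy ->]]. simpl in *. rewrite ext_val_spec; auto. apply ext_val_le; auto.
Defined.

Lemma pminorant_extend_ge : pminorant_le q pminorant_extend.
Proof.
  split.
  - intros u Hu. exists (u, 0). simpl. split; auto. fx; ring.
  - intros u Hu. simpl. replace u with (fadd u (fsc 0 x)) at 2 by (fx; ring).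
    rewrite ext_val_spec; auto. ring.
Qed.

Lemma pminorant_extend_mem : dom pminorant_extend x.
Proof. exists (fzero, 1). simpl. split. apply dom_0. fx; ring. Qed.
End OneStepExtension.

Theorem hahn_banach_sublinear : exists phi : V -> R,
  (forall u v, S u -> S v -> phi (fadd u v) = phi u + phi v) /\
  (forall t u, S u -> phi (fsc t u) = t * phi u) /\
  (forall u, S u -> phi u <= p u).
Proof.
  destruct (hausdorff_maximal pminorant pminorant_le pminorant_le_refl) as [M [HM Hmax]].
  assert (Mne : exists q0, M q0).
  { destruct (classic (exists q0, M q0)) as [H|H]; auto.
    exists pminorant_zero. apply Hmax. intros y Hy. exfalso; apply H; eauto. }
  destruct Mne as [q0 Hq0].
  set (U := pminorant_union M HM q0 Hq0).
  assert (Htot : forall u, S u -> dom U u).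
  { intros u Su. apply NNPP; intro Hn.
    set (E := pminorant_extend U u Su Hn).
    assert (ME : M E).
    { apply Hmax. intros y Hy. left. apply (pminorant_le_trans y U E). apply pminorant_union_ub; auto. apply pminorant_extend_ge. }
    pose proof (pminorant_union_ub M HM q0 Hq0 E ME) as [A _]. apply Hn. apply A. apply pminorant_extend_mem. }
  exists (val U). split; [|split].
  - intros; apply val_add; auto.
  - intros; apply val_sc; auto.
  - intros; apply val_le; auto.
Qed.

End HahnBanach.

Lemma Rinf_add_glb E1 E2 m : (exists r, E1 r) -> (exists r, E2 r) ->
  (forall r1 r2, E1 r1 -> E2 r2 -> m <= r1 + r2) -> m <= Rinf E1 + Rinf E2.
Proof.
  intros H1 H2 H.
  assert (forall r1, E1 r1 -> m - r1 <= Rinf E2).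
  { intros r1 Hr1. apply Rinf_glb; auto. intros r2 Hr2. specialize (H r1 r2 Hr1 Hr2). lra. }
  assert (m - Rinf E2 <= Rinf E1).
  { apply Rinf_glb; auto. intros r1 Hr1. specialize (H0 r1 Hr1). lra. }
  lra.
Qed.

Lemma Rinf_scal E1 E2 t : 0 < t -> (exists r, E1 r) -> (exists m, forall r, E1 r -> m <= r) ->
  (forall r, E2 r <-> exists r', E1 r' /\ r = t * r') -> Rinf E2 = t * Rinf E1.
Proof.
  intros Ht [r0 Hr0] [m Hm] HE.
  assert (HE2 : exists r, E2 r) by (exists (t * r0); apply HE; eauto).
  assert (HE2b : forall r, E2 r -> t * m <= r).
  { intros r Hr. apply HE in Hr. destruct Hr as [r' [Hr' ->]]. specialize (Hm _ Hr').
    apply Rmult_le_compat_l; lra. }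
  apply Rle_antisym.
  - assert (Rinf E2 / t <= Rinf E1).
    { apply Rinf_glb. eauto. intros r' Hr'.
      assert (Rinf E2 <= t * r'). { apply Rinf_lb with (m := t*m); auto. apply HE; eauto. }
      unfold Rdiv. apply (Rmult_le_reg_l t); [lra|].
      replace (t * (Rinf E2 * / t)) with (Rinf E2) by (field; lra). lra. }
    apply (Rmult_le_reg_l (/ t)). apply Rinv_0_lt_compat; auto.
    replace (/ t * (t * Rinf E1)) with (Rinf E1) by (field; lra).
    unfold Rdiv in H. lra.
  - apply Rinf_glb; auto. intros r Hr. apply HE in Hr. destruct Hr as [r' [Hr' ->]].
    apply Rmult_le_compat_l. lra. apply Rinf_lb with (m := m); auto.
Qed.

Definition fi {T} (u : T -> Cx) : T -> Cx := fun x => Cmul (mkC 0 1) (u x).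
Definition fcs {T} (a : Cx) (u : T -> Cx) : T -> Cx := fun x => Cmul a (u x).
(* Complexification of a real-linear functional: u |-> phi u - i phi (i u). *)
Definition cplx {T} (phi : (T -> Cx) -> R) (u : T -> Cx) : Cx := mkC (phi u) (- phi (fi u)).

Section Complexification.
Variable T : Type.
Variable S : (T -> Cx) -> Prop.
Variable phi : (T -> Cx) -> R.
Hypothesis Ssc : forall t u, S u -> S (fsc t u).
Hypothesis Si : forall u, S u -> S (fi u).
Hypothesis phi_add : forall u v, S u -> S v -> phi (fadd u v) = phi u + phi v.
Hypothesis phi_sc : forall t u, S u -> phi (fsc t u) = t * phi u.

Lemma cplx_add u v : S u -> S v -> cplx phi (fadd u v) = Cadd (cplx phi u) (cplx phi v).
Proof.
  intros Hu Hv. unfold cplx.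
  replace (fi (fadd u v)) with (fadd (fi u) (fi v)) by (unfold fi; fx; ring).
  rewrite !phi_add by auto. cx.
Qed.

Lemma cplx_scal a u : S u -> cplx phi (fcs a u) = Cmul a (cplx phi u).
Proof.
  intros Hu. destruct a as [r s]. unfold cplx.
  replace (fcs (mkC r s) u) with (fadd (fsc r u) (fsc s (fi u))) by (unfold fcs, fi, Cmul; fx; ring).
  replace (fi (fadd (fsc r u) (fsc s (fi u)))) with (fadd (fsc r (fi u)) (fsc (-s) u))
    by (unfold fi, Cmul; fx; ring).
  rewrite !phi_add, !phi_sc by auto. cx.
Qed.

End Complexification.

Lemma dual_bound_fi (X : CBanach) (u : X -> Cx) c : dual_bound X u c -> dual_bound X (fi u) c.
Proof.
  intros H x. unfold fi. rewrite Cabs_mul. replace (Cabs (mkC 0 1)) with 1. rewrite Rmult_1_l; auto.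
  unfold Cabs; simpl. replace (0*0+1*1) with 1 by ring. symmetry; apply sqrt_1.
Qed.

Lemma cplx_bound {T} (phi : (T -> Cx) -> R) u (c : R) :
  Rabs (phi u) <= c -> Rabs (phi (fi u)) <= c -> Cabs (cplx phi u) <= 2 * c.
Proof.
  intros H1 H2. eapply Rle_trans. apply Cabs_le_sum. unfold cplx; simpl.
  rewrite Rabs_Ropp. lra.
Qed.

Section DualOps.
Variable X : CBanach.
Lemma is_dual_fadd (u v : X -> Cx) : is_dual X u -> is_dual X v -> is_dual X (fadd u v).
Proof.
  intros [a1 [s1 [M1 b1]]] [a2 [s2 [M2 b2]]]. split; [|split].
  - intros x y. unfold fadd. rewrite a1, a2. cx.
  - intros a x. unfold fadd. rewrite s1, s2. cx.
  - exists (Rabs M1 + Rabs M2). intro x. unfold fadd.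
    eapply Rle_trans. apply Cabs_triangle.
    pose proof (b1 x); pose proof (b2 x). pose proof (vnorm_nonneg _ x).
    pose proof (RRle_abs M1); pose proof (RRle_abs M2). nra.
Qed.

Lemma is_dual_fcs (a : Cx) (u : X -> Cx) : is_dual X u -> is_dual X (fcs a u).
Proof.
  intros [a1 [s1 [M1 b1]]]. split; [|split].
  - intros x y. unfold fcs. rewrite a1. cx.
  - intros b x. unfold fcs. rewrite s1. cx.
  - exists (Cabs a * Rabs M1). intro x. unfold fcs. rewrite Cabs_mul.
    pose proof (b1 x). pose proof (vnorm_nonneg _ x). pose proof (Cabs_nonneg a).
    pose proof (RRle_abs M1).
    rewrite Rmult_assoc. apply Rmult_le_compat_l; auto. nra.
Qed.

Lemma fsc_fcs t (u : X -> Cx) : fsc t u = fcs (mkC t 0) u.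
Proof. unfold fcs, Cmul; fx; ring. Qed.

Lemma is_dual_fsc t (u : X -> Cx) : is_dual X u -> is_dual X (fsc t u).
Proof. intro; rewrite fsc_fcs; apply is_dual_fcs; auto. Qed.
Lemma is_dual_fi (u : X -> Cx) : is_dual X u -> is_dual X (fi u).
Proof. intro; apply is_dual_fcs; auto. Qed.
Lemma is_dual_fzero : is_dual X fzero.
Proof.
  split; [|split]. intros; unfold fzero, C0; cx. intros; unfold fzero, C0; cx.
  exists 0. intro x. unfold fzero. rewrite Cabs_C0. lra.
Qed.

Lemma dual_bound_add (u v : X -> Cx) c1 c2 : dual_bound X u c1 -> dual_bound X v c2 ->
  dual_bound X (fadd u v) (c1 + c2).
Proof.
  intros H1 H2 x. unfold fadd. eapply Rle_trans. apply Cabs_triangle.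
  pose proof (H1 x); pose proof (H2 x). lra.
Qed.

Lemma dual_bound_fcs a (u : X -> Cx) c : dual_bound X u c -> dual_bound X (fcs a u) (Cabs a * c).
Proof.
  intros H x. unfold fcs. rewrite Cabs_mul, Rmult_assoc. apply Rmult_le_compat_l.
  apply Cabs_nonneg. auto.
Qed.

Lemma dual_bound_fsc t (u : X -> Cx) c : dual_bound X u c -> dual_bound X (fsc t u) (Rabs t * c).
Proof. intro H. rewrite fsc_fcs, <- Cabs_real. apply dual_bound_fcs; auto. Qed.

Lemma dual_bound_zero : dual_bound X fzero 0.
Proof. intro x. unfold fzero. rewrite Cabs_C0. lra. Qed.

Lemma dual_bound_nonneg (u : X -> Cx) c : (exists x : X, 0 < vnorm x) -> dual_bound X u c -> 0 <= c.
Proof.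
  intros [x Hx] H. specialize (H x). pose proof (Cabs_nonneg (u x)).
  destruct (Rle_or_lt 0 c); auto. nra.
Qed.

Lemma dual_bound_of_sub (f g : X -> Cx) c1 c2 : dual_bound X f c1 ->
  dual_bound X (fun x => Csub (g x) (f x)) c2 -> dual_bound X g (c1 + c2).
Proof.
  intros H1 H2 x. replace (g x) with (Cadd (f x) (Csub (g x) (f x))) by (unfold Csub; cx).
  eapply Rle_trans. apply Cabs_triangle. pose proof (H1 x). pose proof (H2 x). lra.
Qed.
End DualOps.

Lemma geometric_telescope {T} (dist : T -> T -> R)
  (tri : forall x y z, dist x z <= dist x y + dist y z) (d0 : forall x, dist x x <= 0)
  (u : nat -> T) C r : 0 <= r < 1 ->
  (forall n, dist (u n) (u (S n)) <= C * r ^ n) ->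
  forall n m, (n <= m)%nat -> dist (u n) (u m) <= C * (r ^ n - r ^ m) / (1 - r).
Proof.
  intros Hr Hs n m Hnm. induction Hnm.
  - pose proof (d0 (u n)). replace (C * (r ^ n - r ^ n) / (1 - r)) with 0 by (field; lra). auto.
  - eapply Rle_trans. apply (tri _ (u m)). eapply Rle_trans. apply Rplus_le_compat. apply IHHnm. apply Hs.
    right. simpl. field. lra.
Qed.

Lemma pow_lt_eps r eps : 0 <= r < 1 -> 0 < eps -> exists N, forall n, (N <= n)%nat -> r ^ n < eps.
Proof.
  intros Hr He. destruct (pow_lt_1_zero r ltac:(rewrite Rabs_pos_eq; lra) eps He) as [N HN].
  exists N. intros n Hn. specialize (HN n Hn). rewrite Rabs_pos_eq in HN; auto. apply pow_le; lra.
Qed.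

Lemma pow_unit_interval r n : 0 <= r <= 1 -> 0 <= r ^ n <= 1.
Proof.
  intros Hr. induction n; simpl. lra. split. apply Rmult_le_pos; lra. nra.
Qed.

Lemma geometric_tail_lt C r eps : 0 <= r < 1 -> 0 <= C -> 0 < eps ->
  exists N, forall n m, (N <= n)%nat -> (n <= m)%nat -> C * (r ^ n - r ^ m) / (1 - r) < eps.
Proof.
  intros Hr HC He.
  destruct (pow_lt_eps r (eps * (1 - r) / (C + 1))) as [N HN]; auto.
  { apply Rdiv_lt_0_compat; nra. }
  exists N. intros n m Hn Hm. specialize (HN n Hn).
  pose proof (pow_unit_interval r n ltac:(lra)). pose proof (pow_unit_interval r m ltac:(lra)).
  assert ((C + 1) * r ^ n < eps * (1 - r)).
  { apply Rmult_lt_reg_r with (/ (C + 1)). apply Rinv_0_lt_compat; lra.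
    replace ((C + 1) * r ^ n * / (C + 1)) with (r ^ n) by (field; lra).
    unfold Rdiv in HN. lra. }
  apply Rmult_lt_reg_r with (1 - r); [lra|].
  unfold Rdiv. rewrite Rmult_assoc, Rinv_l, Rmult_1_r by lra. nra.
Qed.

Lemma geometric_cauchy {T} (dist : T -> T -> R) (u : nat -> T) C r :
  (forall x y, dist x y = dist y x) -> 0 <= r < 1 -> 0 <= C ->
  (forall n m, (n <= m)%nat -> dist (u n) (u m) <= C * (r ^ n - r ^ m) / (1 - r)) ->
  forall eps, 0 < eps -> exists N, forall n m, (N <= n)%nat -> (N <= m)%nat -> dist (u n) (u m) < eps.
Proof.
  intros Hsym Hr HC Htel eps He.
  destruct (geometric_tail_lt C r eps Hr HC He) as [N HN]. exists N. intros n m Hn Hm.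
  destruct (Nat.le_gt_cases n m).
  - eapply Rle_lt_trans; [apply Htel; lia | apply HN; lia].
  - rewrite Hsym. eapply Rle_lt_trans; [apply Htel; lia | apply HN; lia].
Qed.

Lemma vgeometric_limit (X : CBanach) (u : nat -> X) C r : 0 <= r < 1 -> 0 <= C ->
  (forall n, vnorm (vadd (u n) (vopp (u (S n)))) <= C * r ^ n) ->
  (forall n, vnorm (vadd (u 0%nat) (vopp (u n))) <= C / (1 - r)) /\
  exists l, forall eps, 0 < eps -> exists N, forall n, (N <= n)%nat -> vnorm (vadd (u n) (vopp l)) < eps.
Proof.
  intros Hr HC Hs.
  assert (Hdiag : forall x : X, vnorm (vadd x (vopp x)) <= 0) by (intro; rewrite vadd_opp, vnorm_0; lra).
  assert (Htel := geometric_telescope _ (vnorm_sub_tri X) Hdiag u C r Hr Hs).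
  split.
  - intro n. eapply Rle_trans. apply Htel; lia. simpl.
    pose proof (pow_unit_interval r n ltac:(lra)). unfold Rdiv.
    apply Rmult_le_compat_r. left; apply Rinv_0_lt_compat; lra. nra.
  - apply vcomplete, (geometric_cauchy (fun x y => vnorm (vadd x (vopp y))) u C r); auto.
    intros; apply vnorm_sub_sym.
Qed.

Definition Ccv (u : nat -> Cx) (l : Cx) :=
  forall eps, 0 < eps -> exists N, forall n, (N <= n)%nat -> Cabs (Csub (u n) l) < eps.

Lemma Ccv_exists (u : nat -> Cx) :
  (forall eps, 0 < eps -> exists N, forall n m, (N <= n)%nat -> (N <= m)%nat -> Cabs (Csub (u n) (u m)) < eps) ->
  exists l, Ccv u l.
Proof.
  intros H.
  assert (HR : Cauchy_crit (fun n => Re (u n))).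
  { intros eps He. destruct (H eps He) as [N HN]. exists N. intros n m Hn Hm.
    unfold R_dist. eapply Rle_lt_trans. 2: apply (HN n m); lia.
    pose proof (Cabs_Re (Csub (u n) (u m))). unfold Csub in H0; simpl in H0. auto. }
  assert (HI : Cauchy_crit (fun n => Im (u n))).
  { intros eps He. destruct (H eps He) as [N HN]. exists N. intros n m Hn Hm.
    unfold R_dist. eapply Rle_lt_trans. 2: apply (HN n m); lia.
    pose proof (Cabs_Im (Csub (u n) (u m))). unfold Csub in H0; simpl in H0. auto. }
  destruct (R_complete _ HR) as [lr Hlr]. destruct (R_complete _ HI) as [li Hli].
  exists (mkC lr li). intros eps He.
  destruct (Hlr (eps/2) ltac:(lra)) as [N1 H1]. destruct (Hli (eps/2) ltac:(lra)) as [N2 H2].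
  exists (max N1 N2). intros n Hn. eapply Rle_lt_trans. apply Cabs_le_sum.
  unfold Csub; simpl. specialize (H1 n ltac:(lia)). specialize (H2 n ltac:(lia)).
  unfold R_dist in *. lra.
Qed.

Lemma Ccv_le (u : nat -> Cx) l z C N0 : Ccv u l -> (forall n, (N0 <= n)%nat -> Cabs (Csub (u n) z) <= C) ->
  Cabs (Csub l z) <= C.
Proof.
  intros Hl Hb. apply Rnot_lt_le. intro H.
  destruct (Hl (Cabs (Csub l z) - C) ltac:(lra)) as [N HN].
  specialize (HN (max N N0) ltac:(lia)). specialize (Hb (max N N0) ltac:(lia)).
  pose proof (Csub_tri l (u (max N N0)) z). rewrite Csub_sym in HN. lra.
Qed.

Lemma Ccv_unique u l l' : Ccv u l -> Ccv u l' -> l = l'.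
Proof.
  intros H1 H2. apply Csub_eq0. apply Rle_antisym; [| apply Cabs_nonneg].
  apply Rnot_lt_le. intro H.
  destruct (H1 (Cabs (Csub l l') / 2) ltac:(lra)) as [N1 HN1].
  destruct (H2 (Cabs (Csub l l') / 2) ltac:(lra)) as [N2 HN2].
  specialize (HN1 (max N1 N2) ltac:(lia)). specialize (HN2 (max N1 N2) ltac:(lia)).
  pose proof (Csub_tri l (u (max N1 N2)) l'). rewrite Csub_sym in HN1. lra.
Qed.

Lemma Ccv_add u v l l' : Ccv u l -> Ccv v l' -> Ccv (fun n => Cadd (u n) (v n)) (Cadd l l').
Proof.
  intros H1 H2 eps He. destruct (H1 (eps/2) ltac:(lra)) as [N1 HN1].
  destruct (H2 (eps/2) ltac:(lra)) as [N2 HN2]. exists (max N1 N2). intros n Hn.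
  replace (Csub (Cadd (u n) (v n)) (Cadd l l')) with (Cadd (Csub (u n) l) (Csub (v n) l')) by (unfold Csub; cx).
  eapply Rle_lt_trans. apply Cabs_triangle. specialize (HN1 n ltac:(lia)). specialize (HN2 n ltac:(lia)). lra.
Qed.

Lemma Ccv_scal a u l : Ccv u l -> Ccv (fun n => Cmul a (u n)) (Cmul a l).
Proof.
  intros H eps He. destruct (H (eps / (Cabs a + 1))) as [N HN].
  { apply Rdiv_lt_0_compat; auto. pose proof (Cabs_nonneg a); lra. }
  exists N. intros n Hn. specialize (HN n Hn).
  replace (Csub (Cmul a (u n)) (Cmul a l)) with (Cmul a (Csub (u n) l)) by (unfold Csub; cx).
  rewrite Cabs_mul. pose proof (Cabs_nonneg a). pose proof (Cabs_nonneg (Csub (u n) l)).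
  apply Rle_lt_trans with (Cabs a * (eps / (Cabs a + 1))).
  apply Rmult_le_compat_l; lra.
  unfold Rdiv. apply Rmult_lt_reg_r with (Cabs a + 1). lra.
  replace (Cabs a * (eps * / (Cabs a + 1)) * (Cabs a + 1)) with (Cabs a * eps) by (field; lra). nra.
Qed.

Lemma Ccv_ext u v l : (forall n, u n = v n) -> Ccv u l -> Ccv v l.
Proof. intros E H eps He. destruct (H eps He) as [N HN]. exists N. intros; rewrite <- E; auto. Qed.

Lemma Ccv_shift u l : Ccv u l -> Ccv (fun n => u (S n)) l.
Proof. intros H eps He. destruct (H eps He) as [N HN]. exists N. intros; apply HN; lia. Qed.

Section DualLimit.
Variable X : CBanach.
Variable w : nat -> X -> Cx.
Hypothesis Hw : forall n, is_dual X (w n).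
Variables C r : R.
Hypothesis Hr : 0 <= r < 1.
Hypothesis HC : 0 <= C.
Hypothesis Hstep : forall n, dual_bound X (fun b => Csub (w (S n) b) (w n b)) (C * r ^ n).

Lemma dlim_telescope b n m : (n <= m)%nat -> Cabs (Csub (w n b) (w m b)) <= C * vnorm b * (r ^ n - r ^ m) / (1 - r).
Proof.
  intro Hnm. apply (geometric_telescope (fun z z' => Cabs (Csub z z')) Csub_tri) with (u := fun n => w n b); auto.
  intros; rewrite Csub_self; lra.
  intros k. rewrite Csub_sym. eapply Rle_trans. apply Hstep. right; ring.
Qed.

Lemma dlim_cauchy b : exists l, Ccv (fun n => w n b) l.
Proof.
  apply Ccv_exists, (geometric_cauchy (fun z z' => Cabs (Csub z z')) _ (C * vnorm b) r Csub_sym Hr).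
  - pose proof (vnorm_nonneg _ b); nra.
  - intros n m; apply dlim_telescope.
Qed.

Definition dlim (b : X) : Cx := proj1_sig (constructive_indefinite_description _ (dlim_cauchy b)).

Lemma dlim_cv b : Ccv (fun n => w n b) (dlim b).
Proof. unfold dlim. apply (proj2_sig (constructive_indefinite_description _ (dlim_cauchy b))). Qed.

Lemma dlim_tail n : dual_bound X (fun b => Csub (dlim b) (w n b)) (C * r ^ n / (1 - r)).
Proof.
  intro b. apply (Ccv_le (fun m => w m b) _ _ _ n). apply dlim_cv.
  intros m Hm. rewrite Csub_sym. eapply Rle_trans. apply dlim_telescope; auto.
  pose proof (vnorm_nonneg _ b). pose proof (pow_unit_interval r m ltac:(lra)). pose proof (pow_unit_interval r n ltac:(lra)).
  pose proof (pow_le r m ltac:(lra)).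
  unfold Rdiv. replace (C * r ^ n * / (1 - r) * vnorm b) with (C * vnorm b * r ^ n * / (1 - r)) by ring.
  apply Rmult_le_compat_r. left; apply Rinv_0_lt_compat; lra.
  assert (0 <= C * vnorm b) by nra. nra.
Qed.

Lemma dlim_dual : is_dual X dlim.
Proof.
  split; [|split].
  - intros x y. apply (Ccv_unique (fun n => w n (vadd x y))). apply dlim_cv.
    apply Ccv_ext with (fun n => Cadd (w n x) (w n y)).
    intro n. destruct (Hw n) as [Ha _]. auto.
    apply Ccv_add; apply dlim_cv.
  - intros a x. apply (Ccv_unique (fun n => w n (vscal a x))). apply dlim_cv.
    apply Ccv_ext with (fun n => Cmul a (w n x)).
    intro n. destruct (Hw n) as [_ [Hs _]]. auto.
    apply Ccv_scal; apply dlim_cv.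
  - destruct (dual_bound_exists _ _ (Hw 0%nat)) as [c0 [Hc0 B0]].
    exists (c0 + C / (1 - r)). apply (dual_bound_of_sub X (w 0%nat)); auto.
    replace (C / (1 - r)) with (C * r ^ 0 / (1 - r)) by (simpl; field; lra). apply dlim_tail.
Qed.
End DualLimit.
Lemma Rdiv_le_0_compat a b : 0 <= a -> 0 < b -> 0 <= a / b.
Proof. intros; unfold Rdiv; apply Rmult_le_pos; auto. left; apply Rinv_0_lt_compat; auto. Qed.

Lemma minorant_abs_le (X : CBanach) (phi p : (X -> Cx) -> R) M :
  (forall t u, is_dual X u -> phi (fsc t u) = t * phi u) ->
  (forall u, is_dual X u -> phi u <= p u) ->
  (forall u c, is_dual X u -> dual_bound X u c -> p u <= M * c) ->
  forall u c, is_dual X u -> dual_bound X u c -> Rabs (phi u) <= M * c.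
Proof.
  intros Hsc Hle Hp u c Hu Hb. apply Rabs_le. split.
  - pose proof (Hle _ (is_dual_fsc _ (-1) _ Hu)) as H. rewrite Hsc in H by auto.
    pose proof (Hp _ _ (is_dual_fsc _ (-1) _ Hu) (dual_bound_fsc _ (-1) _ _ Hb)) as H0.
    rewrite Rabs_left in H0 by lra. lra.
  - pose proof (Hle u Hu). pose proof (Hp u c Hu Hb). lra.
Qed.

Lemma cplx_is_bidual (X : CBanach) (phi : (X -> Cx) -> R) M :
  (forall u v, is_dual X u -> is_dual X v -> phi (fadd u v) = phi u + phi v) ->
  (forall t u, is_dual X u -> phi (fsc t u) = t * phi u) ->
  (forall u c, is_dual X u -> dual_bound X u c -> Rabs (phi u) <= M * c) ->
  is_bidual X (cplx phi).
Proof.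
  intros Hadd Hsc Hb. split; [|split].
  - intros; apply (cplx_add _ (is_dual X) phi (is_dual_fi X) Hadd); auto.
  - intros; apply (cplx_scal _ (is_dual X) phi (is_dual_fsc X) (is_dual_fi X) Hadd Hsc); auto.
  - exists (2 * M). intros u c Hu Hc. rewrite Rmult_assoc. apply cplx_bound.
    + apply Hb; auto.
    + apply Hb. apply is_dual_fi; auto. apply dual_bound_fi; auto.
Qed.

Section Main.
Variable A : BanachAlgebra.
Variable B : BanachLeftModule A.

Notation dact := (dual_act A B).

Lemma act_zero (b : B) : act (@vzero A) b = vzero.
Proof.
  replace (@vzero A) with (vscal C0 (@vzero A)) by apply vscal_0.
  rewrite act_scall. apply vscal_0.
Qed.

Lemma dact_bound z f c : dual_bound B z c -> 0 <= c -> dual_bound B (dact z f) (c * vnorm f).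
Proof.
  intros Hb Hc x. unfold dual_act, adj1. eapply Rle_trans. apply Hb.
  rewrite Rmult_assoc. apply Rmult_le_compat_l; auto. apply act_norm.
Qed.

Lemma dact_is_dual z f : is_dual B z -> is_dual B (dact z f).
Proof.
  intros Hz. pose proof Hz as [Ha [Hs _]]. destruct (dual_bound_exists _ z Hz) as [M [HM Hb]].
  split; [|split].
  - intros x y. unfold dual_act, adj1. rewrite act_addr; auto.
  - intros a x. unfold dual_act, adj1. rewrite act_scalr; auto.
  - exists (M * vnorm f). apply dact_bound; auto.
Qed.

Lemma dual_comp_act_is_dual (w : B -> Cx) (y : B) : is_dual B w -> is_dual A (fun x => w (act x y)).
Proof.
  intros Hz. pose proof Hz as [Ha [Hs _]]. destruct (dual_bound_exists _ w Hz) as [M [HM Hb]].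
  split; [|split].
  - intros x x'. rewrite act_addl; auto.
  - intros a x. rewrite act_scall; auto.
  - exists (M * vnorm y). intro x. eapply Rle_trans. apply Hb.
    replace (M * vnorm y * vnorm x) with (M * (vnorm x * vnorm y)) by ring.
    apply Rmult_le_compat_l; auto. apply act_norm.
Qed.

Lemma dact_lipschitz z c x x' b : is_dual B z -> dual_bound B z c -> 0 <= c ->
  Cabs (Csub (z (act x b)) (z (act x' b))) <= c * (vnorm (vadd x (vopp x')) * vnorm b).
Proof.
  intros Hz Hb Hc. unfold Csub. rewrite <- dual_sub, <- vscal_m1, <- act_scall, vscal_m1, <- act_addl by auto.
  eapply Rle_trans. apply Hb. apply Rmult_le_compat_l; auto. apply act_norm.
Qed.

Lemma dact_add z x x' : is_dual B z -> dact z (vadd x x') = fadd (dact z x) (dact z x').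
Proof.
  intros [Ha _]. apply functional_extensionality; intro b. unfold fadd, dual_act, adj1.
  rewrite act_addl; auto.
Qed.

Lemma dact_scal z a x : is_dual B z -> dact z (vscal a x) = fcs a (dact z x).
Proof.
  intros [_ [Hs _]]. apply functional_extensionality; intro b. unfold fcs, dual_act, adj1.
  rewrite act_scall; auto.
Qed.

Lemma dact_comb z t f g : is_dual B z ->
  dact z (vadd (vscal (mkC t 0) f) (vscal (mkC (1-t) 0) g)) =
  fadd (fsc t (dact z f)) (fsc (1-t) (dact z g)).
Proof. intros Hz. rewrite dact_add, !dact_scal, !fsc_fcs by auto. reflexivity. Qed.

Lemma bidual_comp_dact_is_dual (F : (B -> Cx) -> Cx) z :
  is_bidual B F -> is_dual B z -> is_dual A (fun x => F (dact z x)).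
Proof.
  intros [F_add [F_scal [MF F_bound]]] Hz.
  destruct (dual_bound_exists _ z Hz) as [cz [Hcz Bz]].
  split; [|split].
  - intros x x'. rewrite dact_add by auto. apply F_add; apply dact_is_dual; auto.
  - intros a x. rewrite dact_scal by auto. apply F_scal; apply dact_is_dual; auto.
  - exists (MF * cz). intro x. rewrite Rmult_assoc. apply F_bound.
    apply dact_is_dual; auto. apply dact_bound; auto.
Qed.

Section ApproximateIdentity.
Variable I : Type.
Variable le : I -> I -> Prop.
Variable e : I -> A.
Variable i00 : I.
Hypothesis le_refl : forall i, le i i.
Hypothesis le_trans : forall i j k, le i j -> le j k -> le i k.
Hypothesis le_dir : forall i j, exists k, le i k /\ le j k.
Variable K : R.
Hypothesis Kpos : 0 < K.
Hypothesis eK : forall i, vnorm (e i) <= K.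
Hypothesis eA : forall (a : A) eps, 0 < eps -> exists i0, forall i, le i0 i ->
        vnorm (vadd (amul (e i) a) (vopp a)) < eps.
Hypothesis eB : forall (b : B) eps, 0 < eps -> exists i0, forall i, le i0 i ->
        vnorm (vadd (act (e i) b) (vopp b)) < eps.
Hypothesis wap : forall z, is_dual B z -> in_wap_l A B z.
Hypothesis Bnt : exists b : B, 0 < vnorm b.

Lemma A_nontrivial : exists a : A, 0 < vnorm a.
Proof.
  destruct Bnt as [b Hb]. destruct (eB b (vnorm b / 2)) as [i0 Hi0]. lra.
  specialize (Hi0 i0 (le_refl i0)). exists (e i0).
  pose proof (vnorm_sub_tri _ b (act (e i0) b) vzero) as H.
  rewrite vnorm_sub_sym in Hi0. rewrite vopp_0, !vadd_0 in H.
  pose proof (act_norm _ B (e i0) b).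
  destruct (Rle_or_lt (vnorm (e i0)) 0) as [H1|H1]; auto.
  pose proof (vnorm_nonneg _ (e i0)). assert (vnorm (e i0) = 0) by lra. rewrite H3 in H0. lra.
Qed.

Inductive tail_hull (i1 : I) : A -> Prop :=
| th_e : forall i, le i1 i -> tail_hull i1 (e i)
| th_comb : forall t f g, 0 <= t <= 1 -> tail_hull i1 f -> tail_hull i1 g ->
    tail_hull i1 (vadd (vscal (mkC t 0) f) (vscal (mkC (1-t) 0) g)).

Lemma tail_hull_norm i1 f : tail_hull i1 f -> vnorm f <= K.
Proof.
  induction 1. apply eK.
  eapply Rle_trans. apply vnorm_convex; auto. nra.
Qed.

Lemma tail_hull_approx i1 (y : A) d : (forall i, le i1 i -> vnorm (vadd (amul (e i) y) (vopp y)) <= d) ->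
  forall f, tail_hull i1 f -> vnorm (vadd (amul f y) (vopp y)) <= d.
Proof.
  intros H f Hf. induction Hf. auto.
  rewrite amul_addl, !amul_scall, vconvex_sub.
  eapply Rle_trans. apply vnorm_convex; auto. nra.
Qed.

Definition eventual_ub (h : A -> Cx) (t : R) := exists i0, forall i, le i0 i -> Re (h (e i)) <= t.
Definition tail_limsup (h : A -> Cx) := Rinf (eventual_ub h).

Lemma eventual_ub_ex h c : dual_bound A h c -> eventual_ub h (c * K).
Proof.
  intros Hb. pose proof (dual_bound_nonneg _ h c A_nontrivial Hb).
  exists i00. intros i _. eapply Rle_trans. apply Rle_trans with (1 := RRle_abs _). apply Cabs_Re.
  eapply Rle_trans. apply Hb. apply Rmult_le_compat_l; auto.
Qed.

Lemma eventual_ub_lb h c : dual_bound A h c -> forall t, eventual_ub h t -> - (c * K) <= t.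
Proof.
  intros Hb t [i0 H]. pose proof (dual_bound_nonneg _ h c A_nontrivial Hb).
  specialize (H i0 (le_refl i0)).
  pose proof (Cabs_Re (h (e i0))). pose proof (Hb (e i0)). pose proof (eK i0).
  assert (c * vnorm (e i0) <= c * K) by (apply Rmult_le_compat_l; auto).
  pose proof (Rle_abs (- Re (h (e i0)))). rewrite Rabs_Ropp in H5. lra.
Qed.

Lemma tail_limsup_le h t : is_dual A h -> eventual_ub h t -> tail_limsup h <= t.
Proof.
  intros Hh Ht. destruct (ex_bound _ _ Hh) as [c Bc].
  apply Rinf_lb with (m := -(c * K)); auto. apply eventual_ub_lb; auto.
Qed.

Lemma tail_limsup_add h1 h2 : is_dual A h1 -> is_dual A h2 ->
  tail_limsup (fadd h1 h2) <= tail_limsup h1 + tail_limsup h2.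
Proof.
  intros H1 H2. destruct (ex_bound _ _ H1) as [c1 B1]. destruct (ex_bound _ _ H2) as [c2 B2].
  apply Rinf_add_glb. eexists; apply (eventual_ub_ex _ _ B1). eexists; apply (eventual_ub_ex _ _ B2).
  intros r1 r2 [i1 E1] [i2 E2]. apply tail_limsup_le. apply is_dual_fadd; auto.
  destruct (le_dir i1 i2) as [k [Hk1 Hk2]]. exists k. intros i Hi.
  unfold fadd; simpl. pose proof (E1 i (le_trans _ _ _ Hk1 Hi)). pose proof (E2 i (le_trans _ _ _ Hk2 Hi)). lra.
Qed.

Lemma tail_limsup_scal t h : 0 < t -> is_dual A h -> tail_limsup (fsc t h) = t * tail_limsup h.
Proof.
  intros Ht Hh. destruct (ex_bound _ _ Hh) as [c Bc]. unfold tail_limsup. apply Rinf_scal; auto.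
  - eexists; apply (eventual_ub_ex _ _ Bc).
  - exists (-(c*K)). apply eventual_ub_lb; auto.
  - intros r; split.
    + intros [i0 H]. exists (r / t). split.
      * exists i0. intros i Hi. specialize (H i Hi). unfold fsc in H; simpl in H.
        apply (Rmult_le_reg_l t); auto. unfold Rdiv. replace (t * (r * / t)) with r by (field; lra). auto.
      * field; lra.
    + intros [r' [[i0 H] ->]]. exists i0. intros i Hi. unfold fsc; simpl.
      apply Rmult_le_compat_l; auto. lra.
Qed.

Lemma tail_limsup_bound h c : is_dual A h -> dual_bound A h c -> tail_limsup h <= K * c.
Proof.
  intros Hh Hb. rewrite Rmult_comm. apply tail_limsup_le; auto. apply eventual_ub_ex; auto.
Qed.

Lemma tail_limsup_orbit (w : B -> Cx) (y : B) : is_dual B w ->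
  tail_limsup (fun x => w (act x y)) <= Re (w y).
Proof.
  intros Hw. apply Rnot_lt_le. intro Hlt.
  set (eps := (tail_limsup (fun x => w (act x y)) - Re (w y)) / 2).
  destruct (dual_bound_exists _ w Hw) as [M [HM Hb]].
  destruct (eB y (eps / (M + 1))) as [i0 Hi0].
  { apply Rdiv_lt_0_compat; unfold eps; lra. }
  enough (tail_limsup (fun x => w (act x y)) <= Re (w y) + eps) by (unfold eps in *; lra).
  apply tail_limsup_le. apply dual_comp_act_is_dual; auto.
  exists i0. intros i Hi. specialize (Hi0 i Hi).
  pose proof (Hb (vadd (act (e i) y) (vopp y))) as H.
  rewrite (dual_sub _ w _ _ Hw) in H.
  pose proof (Cabs_Re (mkC (Re (w (act (e i) y)) - Re (w y)) (Im (w (act (e i) y)) - Im (w y)))) as H0.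
  simpl in H0. pose proof (RRle_abs (Re (w (act (e i) y)) - Re (w y))).
  assert (M * vnorm (vadd (act (e i) y) (vopp y)) <= M * (eps / (M+1))).
  { apply Rmult_le_compat_l; lra. }
  assert (M * (eps / (M+1)) <= eps).
  { unfold Rdiv. apply Rmult_le_reg_r with (M+1). lra.
    replace (M * (eps * / (M + 1)) * (M + 1)) with (M * eps) by (field; lra).
    unfold eps; nra. }
  lra.
Qed.

Lemma bidual_unit_exists : exists G, is_bidual A G /\
  (forall w y, is_dual B w -> G (fun x => w (act x y)) = w y) /\
  (forall g, is_dual A g -> Re (G g) <= tail_limsup g).
Proof.
  destruct (hahn_banach_sublinear A (is_dual A) tail_limsup (is_dual_fzero A) (is_dual_fadd A)
    (is_dual_fsc A) tail_limsup_add tail_limsup_scal) as [psi [psi_add [psi_sc psi_le]]].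
  assert (psi_orbit : forall w y, is_dual B w -> psi (fun x => w (act x y)) = Re (w y)).
  { intros w y Hw. apply Rle_antisym.
    - eapply Rle_trans. apply psi_le. apply dual_comp_act_is_dual; auto. apply tail_limsup_orbit; auto.
    - pose proof (psi_le _ (is_dual_fsc _ (-1) _ (dual_comp_act_is_dual w y Hw))) as H.
      rewrite psi_sc in H by (apply dual_comp_act_is_dual; auto).
      pose proof (tail_limsup_orbit (fsc (-1) w) y (is_dual_fsc _ _ _ Hw)) as H0.
      unfold fsc in H0 at 2. simpl in H0.
      change (fsc (-1) (fun x => w (act x y))) with (fun x => fsc (-1) w (act x y)) in H. lra. }
  exists (cplx psi). split; [|split].
  - apply (cplx_is_bidual A psi K); auto.
    apply (minorant_abs_le A psi tail_limsup K); auto. apply tail_limsup_bound.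
  - intros w y Hw. apply Cx_ext; simpl.
    + apply psi_orbit; auto.
    + change (fi (fun x => w (act x y))) with (fun x => fi w (act x y)).
      rewrite psi_orbit by (apply is_dual_fi; auto). unfold fi, Cmul; simpl. ring.
  - intros g Hg. apply psi_le; auto.
Qed.

Section Separation.
Variable z : B -> Cx.
Hypothesis Hz : is_dual B z.
Variable i1 : I.
Variable d : R.
Hypothesis far : forall f, tail_hull i1 f -> ~ dual_bound B (fadd z (fsc (-1) (dact z f))) d.

Definition defect k := exists f, tail_hull i1 f /\ k = fadd z (fsc (-1) (dact z f)).

(* The gauge p(u) = inf { |u + s k| - s d : s >= 0, k in defect } is sublinear, dominated by the
   dual norm, and <= -d on -defect: the convex set [defect] stays at distance > d from 0. *)
Definition gauge_values u r :=
  exists c s k, 0 <= s /\ defect k /\ dual_bound B (fadd u (fsc s k)) c /\ r = c - s * d.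
Definition mazur_gauge u := Rinf (gauge_values u).

Lemma defect_is_dual k : defect k -> is_dual B k.
Proof.
  intros [f [_ ->]]. apply is_dual_fadd; auto. apply is_dual_fsc. apply dact_is_dual; auto.
Qed.

Lemma defect_convex k1 k2 s1 s2 : defect k1 -> defect k2 -> 0 <= s1 -> 0 <= s2 -> 0 < s1 + s2 ->
  defect (fadd (fsc (s1 / (s1 + s2)) k1) (fsc (s2 / (s1 + s2)) k2)).
Proof.
  intros [f1 [H1 ->]] [f2 [H2 ->]] Hs1 Hs2 Hs.
  set (t := s1 / (s1 + s2)).
  assert (0 <= t <= 1). { unfold t; split. apply Rdiv_le_0_compat; lra.
    apply (Rmult_le_reg_r (s1+s2)); auto. unfold Rdiv. field_simplify; lra. }
  exists (vadd (vscal (mkC t 0) f1) (vscal (mkC (1-t) 0) f2)). split.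
  constructor; auto.
  rewrite dact_comb by auto.
  replace (s2 / (s1 + s2)) with (1 - t) by (unfold t; field; lra).
  fx; ring.
Qed.

Lemma gauge_values_ex u c : dual_bound B u c -> gauge_values u c.
Proof.
  intros Hb. exists c, 0, (fadd z (fsc (-1) (dact z (e i1)))). split. lra. split.
  - exists (e i1). split; auto. constructor; auto.
  - split; [|ring]. replace (fadd u (fsc 0 (fadd z (fsc (-1) (dact z (e i1)))))) with u by (fx; ring). auto.
Qed.

Lemma gauge_values_lb u cu : dual_bound B u cu -> forall r, gauge_values u r -> - cu <= r.
Proof.
  intros Hu r [c [s [k [Hs [Hk [Hb ->]]]]]].
  pose proof (dual_bound_nonneg _ u cu Bnt Hu) as Hcu.
  destruct Hk as [f [Hf Hk]]. pose proof (far f Hf) as Hn. rewrite <- Hk in Hn.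
  unfold dual_bound in Hn. apply not_all_ex_not in Hn. destruct Hn as [b Hn]. apply Rnot_le_lt in Hn.
  assert (Hkd : is_dual B k) by (apply defect_is_dual; exists f; auto).
  destruct (dual_bound_exists _ k Hkd) as [Mk [HMk Hbk]].
  assert (Hbpos : 0 < vnorm b).
  { destruct (Rle_or_lt (vnorm b) 0) as [H|H]; auto. pose proof (vnorm_nonneg _ b).
    assert (vnorm b = 0) by lra. specialize (Hbk b). rewrite H1 in *. lra. }
  pose proof (Hb b) as H1. pose proof (Hu b) as H2. unfold fadd in H1.
  pose proof (Cabs_sub_le (u b) (fsc s k b)) as H3.
  assert (Cabs (fsc s k b) = s * Cabs (k b)) as H4.
  { replace (fsc s k b) with (Cmul (mkC s 0) (k b)) by (unfold fsc; cx).
    rewrite Cabs_mul, Cabs_real, Rabs_pos_eq by auto. auto. }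
  rewrite H4 in H3.
  assert (s * (d * vnorm b) <= s * Cabs (k b)) by (apply Rmult_le_compat_l; lra).
  assert (s * d * vnorm b <= (c + cu) * vnorm b) by nra.
  assert (s * d <= c + cu) by (apply Rmult_le_reg_r with (vnorm b); auto).
  lra.
Qed.

Lemma mazur_gauge_le u r : is_dual B u -> gauge_values u r -> mazur_gauge u <= r.
Proof.
  intros Hu Hr. destruct (ex_bound _ _ Hu) as [c Bc].
  apply Rinf_lb with (m := - c); auto. apply gauge_values_lb; auto.
Qed.

Lemma mazur_gauge_add u v : is_dual B u -> is_dual B v ->
  mazur_gauge (fadd u v) <= mazur_gauge u + mazur_gauge v.
Proof.
  intros Hu Hv. destruct (ex_bound _ _ Hu) as [cu Bu]. destruct (ex_bound _ _ Hv) as [cv Bv].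
  apply Rinf_add_glb. eexists; apply (gauge_values_ex _ _ Bu). eexists; apply (gauge_values_ex _ _ Bv).
  intros r1 r2 [c1 [s1 [k1 [Hs1 [Hk1 [Hb1 ->]]]]]] [c2 [s2 [k2 [Hs2 [Hk2 [Hb2 ->]]]]]].
  apply mazur_gauge_le. apply is_dual_fadd; auto.
  pose proof (dual_bound_add _ _ _ _ _ Hb1 Hb2) as Hb.
  destruct (Req_dec (s1 + s2) 0) as [H0|H0].
  - assert (s1 = 0) by lra. assert (s2 = 0) by lra. subst.
    exists (c1 + c2), 0, k1. split. lra. split; auto. split; [|ring].
    replace (fadd (fadd u v) (fsc 0 k1)) with (fadd (fadd u (fsc 0 k1)) (fadd v (fsc 0 k2)))
      by (fx; ring). auto.
  - exists (c1 + c2), (s1 + s2), (fadd (fsc (s1 / (s1 + s2)) k1) (fsc (s2 / (s1 + s2)) k2)).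
    split. lra. split. apply defect_convex; auto; lra. split; [|ring].
    replace (fadd (fadd u v) (fsc (s1 + s2) (fadd (fsc (s1 / (s1 + s2)) k1) (fsc (s2 / (s1 + s2)) k2))))
      with (fadd (fadd u (fsc s1 k1)) (fadd v (fsc s2 k2))). auto.
    fx; field; auto.
Qed.

Lemma mazur_gauge_scal t u : 0 < t -> is_dual B u -> mazur_gauge (fsc t u) = t * mazur_gauge u.
Proof.
  intros Ht Hu. destruct (ex_bound _ _ Hu) as [c Bc]. unfold mazur_gauge. apply Rinf_scal; auto.
  - eexists; apply (gauge_values_ex _ _ Bc).
  - exists (-c). apply gauge_values_lb; auto.
  - intros r; split.
    + intros [c' [s [k [Hs [Hk [Hb ->]]]]]]. exists (c'/t - (s/t) * d). split; [|field; lra].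
      exists (c'/t), (s/t), k. split. apply Rdiv_le_0_compat; lra. split; auto. split; auto.
      replace (fadd u (fsc (s / t) k)) with (fsc (/ t) (fadd (fsc t u) (fsc s k))) by (fx; field; lra).
      replace (c' / t) with (Rabs (/ t) * c'). apply dual_bound_fsc; auto.
      rewrite Rabs_pos_eq. unfold Rdiv; ring. left; apply Rinv_0_lt_compat; auto.
    + intros [r' [[c' [s [k [Hs [Hk [Hb ->]]]]]] ->]].
      exists (t * c'), (t * s), k. split. nra. split; auto. split; [|ring].
      replace (fadd (fsc t u) (fsc (t * s) k)) with (fsc t (fadd u (fsc s k))) by (fx; ring).
      replace (t * c') with (Rabs t * c'). apply dual_bound_fsc; auto. rewrite Rabs_pos_eq; lra.
Qed.

Lemma mazur_gauge_neg_defect k : defect k -> mazur_gauge (fsc (-1) k) <= - d.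
Proof.
  intros Hk. apply mazur_gauge_le. apply is_dual_fsc, defect_is_dual; auto.
  exists 0, 1, k. split. lra. split; auto. split; [|ring].
  replace (fadd (fsc (-1) k) (fsc 1 k)) with (@fzero B) by (fx; ring). apply dual_bound_zero.
Qed.

Lemma separating_bidual : exists F, is_bidual B F /\
  forall f, tail_hull i1 f -> Re (F (dact z f)) + d <= Re (F z).
Proof.
  destruct (hahn_banach_sublinear B (is_dual B) mazur_gauge (is_dual_fzero B) (is_dual_fadd B)
    (is_dual_fsc B) mazur_gauge_add mazur_gauge_scal) as [phi [phi_add [phi_sc phi_le]]].
  exists (cplx phi). split.
  - apply (cplx_is_bidual B phi 1); auto. apply (minorant_abs_le B phi mazur_gauge 1); auto.
    intros u c Hu Hb. rewrite Rmult_1_l. apply mazur_gauge_le; auto. apply gauge_values_ex; auto.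
  - intros f Hf. simpl.
    assert (Hk : defect (fadd z (fsc (-1) (dact z f)))) by (exists f; auto).
    assert (Hzf : is_dual B (dact z f)) by (apply dact_is_dual; auto).
    pose proof (phi_le _ (is_dual_fsc _ (-1) _ (defect_is_dual _ Hk))) as H.
    pose proof (mazur_gauge_neg_defect _ Hk).
    rewrite phi_sc, phi_add, phi_sc in H; [lra | auto | auto | apply is_dual_fsc; auto
      | apply defect_is_dual; auto].
Qed.

End Separation.

Lemma dual_tail_hull_approx z i1 d : is_dual B z -> 0 < d ->
  exists f, tail_hull i1 f /\ dual_bound B (fadd z (fsc (-1) (dact z f))) d.
Proof.
  intros Hz Hd. apply NNPP; intro Hn.
  destruct (separating_bidual z Hz i1 d) as [F [HF Hsep]].
  { intros f Hf Hb. apply Hn. exists f; auto. }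
  destruct bidual_unit_exists as [G [HG [G_unit G_tail]]].
  set (g := fun x => F (dact z x)).
  (* wap: the two Arens products of G and F agree at z, and G is a left unit. *)
  assert (Arens : G g = F z).
  { destruct (wap z Hz) as [_ W]. specialize (W G F HG HF).
    unfold adj3t, adj3, adj2, adj1, flip in W.
    rewrite (functional_extensionality _ z (fun y => G_unit z y Hz)) in W. exact W. }
  assert (Re (G g) <= Re (F z) - d).
  { eapply Rle_trans. apply G_tail, bidual_comp_dact_is_dual; auto.
    apply tail_limsup_le. apply bidual_comp_dact_is_dual; auto.
    exists i1. intros i Hi. unfold g. pose proof (Hsep (e i) (th_e i1 i Hi)). lra. }
  rewrite Arens in H. lra.
Qed.

(* Cohen's parameter c: for |f| <= K the map w |-> (1 - c) w + c (w f) is inverted by a Neumann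
   series of ratio rho = c K / (1 - c) < 1/2, with inverse norm at most Lam. *)
Definition cc := / (2 * (K + 1)).
Definition rho := cc * K / (1 - cc).
Definition Lam := / ((1 - cc) * (1 - rho)).

Lemma cc_facts : 0 < cc /\ cc < 1/2 /\ 0 <= rho < 1/2 /\ 0 < Lam.
Proof.
  unfold Lam, rho, cc. assert (0 < 2 * (K + 1)) by lra.
  assert (0 < / (2 * (K + 1))) by (apply Rinv_0_lt_compat; auto).
  assert (/ (2 * (K + 1)) < 1/2).
  { apply Rmult_lt_reg_r with (2 * (K+1)); auto. rewrite Rinv_l by lra. lra. }
  assert (Hr : / (2 * (K + 1)) * K / (1 - / (2 * (K + 1))) = K / (2 * K + 1)).
  { field. lra. }
  rewrite Hr. assert (0 <= K / (2 * K + 1) < 1/2).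
  { split. apply Rdiv_le_0_compat; lra. apply Rmult_lt_reg_r with (2*K+1). lra.
    unfold Rdiv. rewrite Rmult_assoc, Rinv_l by lra. lra. }
  repeat split; try lra. apply Rinv_0_lt_compat. apply Rmult_lt_0_compat; lra.
Qed.

Definition cohen_map (w : B -> Cx) (f : A) : B -> Cx :=
  fun b => Cadd (Cmul (mkC (1 - cc) 0) (w b)) (Cmul (mkC cc 0) (w (act f b))).

Lemma Cabs_scal_real t z : 0 <= t -> Cabs (Cmul (mkC t 0) z) = t * Cabs z.
Proof. intro. rewrite Cabs_mul, Cabs_real, Rabs_pos_eq; auto. Qed.

Lemma neumann_bound_step v w f cv W : vnorm f <= K -> 0 <= W ->
  (forall b, v b = cohen_map w f b) ->
  dual_bound B v cv -> dual_bound B w W -> dual_bound B w (cv / (1 - cc) + rho * W).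
Proof.
  intros Hf HW E Hv HwW b. destruct cc_facts as [c1 [c2 [c3 c4]]].
  assert (Cmul (mkC (1-cc) 0) (w b) = Cadd (v b) (Cmul (mkC (-cc) 0) (w (act f b)))).
  { rewrite E. unfold cohen_map. cx. }
  assert (Cabs (Cmul (mkC (1-cc) 0) (w b)) <= cv * vnorm b + cc * (W * K * vnorm b)).
  { rewrite H. eapply Rle_trans. apply Cabs_triangle. apply Rplus_le_compat. apply Hv.
    rewrite Cabs_mul, Cabs_real, Rabs_left by lra. replace (- - cc) with cc by ring.
    apply Rmult_le_compat_l. lra. eapply Rle_trans. apply HwW.
    rewrite Rmult_assoc. apply Rmult_le_compat_l; auto.
    eapply Rle_trans. apply act_norm. apply Rmult_le_compat_r; auto. apply vnorm_nonneg. }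
  rewrite Cabs_scal_real in H0 by lra.
  unfold rho. apply Rmult_le_reg_l with (1 - cc). lra.
  replace ((1 - cc) * ((cv / (1 - cc) + cc * K / (1 - cc) * W) * vnorm b)) with
    (cv * vnorm b + cc * (W * K * vnorm b)) by (field; lra). auto.
Qed.

Lemma neumann_bound v w f cv : is_dual B w -> vnorm f <= K ->
  (forall b, v b = cohen_map w f b) -> dual_bound B v cv -> dual_bound B w (Lam * cv).
Proof.
  intros Hw Hf E Hv. destruct cc_facts as [c1 [c2 [c3 c4]]].
  destruct (dual_bound_exists _ w Hw) as [W0 [HW0 BW0]].
  assert (Hcv : 0 <= cv) by (apply (dual_bound_nonneg _ v cv Bnt Hv)).
  set (L := Lam * cv). assert (HL : 0 <= L) by (unfold L; nra).
  set (W1 := Rmax W0 L).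
  assert (HLW : L <= W1) by apply Rmax_r.
  assert (Hn : forall n, dual_bound B w (L + rho ^ n * (W1 - L))).
  { induction n.
    - simpl. replace (L + 1 * (W1 - L)) with W1 by ring. intro b. eapply Rle_trans. apply BW0.
      apply Rmult_le_compat_r. apply vnorm_nonneg. apply Rmax_l.
    - pose proof (pow_le rho n ltac:(lra)).
      eapply neumann_bound_step in IHn; eauto. 2: { nra. }
      replace (L + rho ^ S n * (W1 - L)) with (cv / (1 - cc) + rho * (L + rho ^ n * (W1 - L))); auto.
      simpl. unfold L, Lam. field. split; lra. }
  intro b. apply Rnot_lt_le. intro H.
  assert (Hb : 0 < vnorm b).
  { destruct (Rle_or_lt (vnorm b) 0); auto. pose proof (vnorm_nonneg _ b).
    assert (vnorm b = 0) by lra. pose proof (Hn 0%nat b). rewrite H2 in *. lra. }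
  set (gap := Cabs (w b) - L * vnorm b).
  destruct (pow_lt_eps rho (gap / ((W1 - L + 1) * vnorm b))) as [N HN]. lra.
  { apply Rdiv_lt_0_compat. unfold gap; lra. nra. }
  specialize (HN N (le_n N)). specialize (Hn N b).
  pose proof (pow_le rho N ltac:(lra)).
  assert (rho ^ N * (W1 - L) * vnorm b < gap).
  { apply Rle_lt_trans with (rho ^ N * ((W1 - L + 1) * vnorm b)).
    rewrite Rmult_assoc. apply Rmult_le_compat_l; auto. nra.
    apply Rmult_lt_reg_r with (/ ((W1 - L + 1) * vnorm b)). apply Rinv_0_lt_compat; nra.
    rewrite Rmult_assoc, Rinv_r by nra. rewrite Rmult_1_r. auto. }
  unfold gap in H1. lra.
Qed.

Fixpoint neumann_iter (v : B -> Cx) (f : A) (n : nat) : B -> Cx :=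
  match n with
  | O => fzero
  | S m => fun b => Cmul (mkC (/ (1 - cc)) 0)
             (Cadd (v b) (Cmul (mkC (- cc) 0) (neumann_iter v f m (act f b))))
  end.

Lemma neumann_iter_dual v f n : is_dual B v -> is_dual B (neumann_iter v f n).
Proof.
  intros Hv. induction n; simpl. apply is_dual_fzero.
  change (is_dual B (fcs (mkC (/ (1 - cc)) 0) (fadd v (fcs (mkC (- cc) 0) (dact (neumann_iter v f n) f))))).
  apply is_dual_fcs, is_dual_fadd; auto. apply is_dual_fcs, dact_is_dual; auto.
Qed.

Lemma neumann_iter_increment v f cv : vnorm f <= K -> dual_bound B v cv -> 0 <= cv -> forall n,
  dual_bound B (fun b => Csub (neumann_iter v f (S n) b) (neumann_iter v f n b)) (cv / (1 - cc) * rho ^ n).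
Proof.
  intros Hf Bv Hcv. destruct cc_facts as [c1 [c2 [c3 c4]]].
  induction n; intro b.
  - simpl. unfold fzero.
    replace (Csub (Cmul (mkC (/ (1 - cc)) 0) (Cadd (v b) (Cmul (mkC (- cc) 0) C0))) C0)
      with (Cmul (mkC (/ (1 - cc)) 0) (v b)) by (unfold Csub, C0; cx).
    rewrite Cabs_scal_real. 2: { left; apply Rinv_0_lt_compat; lra. }
    replace (cv / (1 - cc) * 1 * vnorm b) with (/ (1 - cc) * (cv * vnorm b)) by (field; lra).
    apply Rmult_le_compat_l. left; apply Rinv_0_lt_compat; lra. apply Bv.
  - change (neumann_iter v f (S (S n)) b) with (Cmul (mkC (/ (1 - cc)) 0)
      (Cadd (v b) (Cmul (mkC (- cc) 0) (neumann_iter v f (S n) (act f b))))).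
    change (neumann_iter v f (S n) b) with (Cmul (mkC (/ (1 - cc)) 0)
      (Cadd (v b) (Cmul (mkC (- cc) 0) (neumann_iter v f n (act f b))))).
    match goal with |- Cabs ?lhs <= _ => replace lhs with
      (Cmul (mkC (- (cc / (1 - cc))) 0)
         (Csub (neumann_iter v f (S n) (act f b)) (neumann_iter v f n (act f b))))
      by (unfold Csub; apply Cx_ext; cbn [Re Im Cmul Cadd]; field; lra) end.
    assert (Hq : 0 < cc / (1 - cc)) by (apply Rdiv_lt_0_compat; lra).
    rewrite Cabs_mul, Cabs_real, Rabs_left, Ropp_involutive by lra.
    eapply Rle_trans. apply Rmult_le_compat_l. lra. apply IHn.
    assert (vnorm (act f b) <= K * vnorm b).
    { eapply Rle_trans. apply act_norm. apply Rmult_le_compat_r; auto. apply vnorm_nonneg. }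
    pose proof (pow_le rho n ltac:(lra)).
    assert (0 <= cv / (1 - cc)) by (apply Rdiv_le_0_compat; lra).
    replace (cv / (1 - cc) * rho ^ S n * vnorm b) with
      (cc / (1 - cc) * (cv / (1 - cc) * rho ^ n * (K * vnorm b))) by (simpl; unfold rho; field; lra).
    apply Rmult_le_compat_l. lra. apply Rmult_le_compat_l; auto. nra.
Qed.

Lemma neumann_solve v f : is_dual B v -> vnorm f <= K ->
  exists w, is_dual B w /\ forall b, v b = cohen_map w f b.
Proof.
  intros Hv Hf. destruct cc_facts as [c1 [c2 [c3 c4]]].
  destruct (dual_bound_exists _ v Hv) as [cv [Hcv Bv]].
  set (wn := neumann_iter v f).
  assert (hr : 0 <= rho < 1) by lra.
  assert (hC : 0 <= cv / (1 - cc)) by (apply Rdiv_le_0_compat; lra).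
  set (w := dlim B wn (cv / (1 - cc)) rho hr hC (neumann_iter_increment v f cv Hf Bv Hcv)).
  exists w. split. { apply dlim_dual. intro; apply neumann_iter_dual; auto. }
  intro b.
  assert (H1 : Ccv (fun n => wn (S n) b) (w b)) by (apply (Ccv_shift (fun n => wn n b)), dlim_cv).
  assert (H2 : Ccv (fun n => wn (S n) b)
                 (Cmul (mkC (/ (1 - cc)) 0) (Cadd (v b) (Cmul (mkC (- cc) 0) (w (act f b)))))).
  { apply (Ccv_scal _ (fun n => Cadd (v b) (Cmul (mkC (- cc) 0) (wn n (act f b))))).
    apply (Ccv_add (fun _ => v b) (fun n => Cmul (mkC (- cc) 0) (wn n (act f b)))).
    - intros eps He. exists 0%nat. intros. rewrite Csub_self. auto.
    - apply (Ccv_scal _ (fun n => wn n (act f b))). apply dlim_cv. }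
  unfold cohen_map. rewrite (Ccv_unique _ _ _ H1 H2).
  apply Cx_ext; simpl; field; lra.
Qed.

Definition rr := 1 - cc.

Lemma rr_facts : 1/2 < rr < 1.
Proof. destruct cc_facts as [c1 [c2 _]]. unfold rr. lra. Qed.

(* With f in a tail hull, x = (1 - c) x' + c (x' f) and y' = (1 - c) y + c (f y) + c r^k f,
   one has r^k x + x y = r^(k+1) x' + x' y'. *)
Lemma cohen_step x y k : is_dual B x -> exists p : (B -> Cx) * A, is_dual B (fst p) /\
  (forall b, Cadd (Cmul (mkC (rr ^ k) 0) (x b)) (x (act y b)) =
             Cadd (Cmul (mkC (rr ^ S k) 0) (fst p b)) (fst p (act (snd p) b))) /\
  dual_bound B (fun b => Csub (fst p b) (x b)) (cc * (Lam * rr ^ k)) /\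
  vnorm (vadd (snd p) (vopp y)) <= cc * (1 + K) * rr ^ k.
Proof.
  intros Hx. destruct cc_facts as [c1 [c2 [c3 c4]]]. pose proof rr_facts as Hrr.
  assert (Ht : 0 < rr ^ k) by (apply pow_lt; lra).
  destruct (eA y (rr ^ k) Ht) as [i1 Hi1].
  destruct (dual_tail_hull_approx x i1 (rr ^ k) Hx Ht) as [f [Hf Hb]].
  assert (Hfy : vnorm (vadd (amul f y) (vopp y)) <= rr ^ k).
  { apply (tail_hull_approx i1); auto. intros i Hi. left; apply Hi1; auto. }
  assert (HfK := tail_hull_norm i1 f Hf).
  destruct (neumann_solve x f Hx HfK) as [w [Hw E]].
  exists (w, vadd (vadd (vscal (mkC rr 0) y) (vscal (mkC cc 0) (amul f y))) (vscal (mkC (cc * rr ^ k) 0) f)).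
  simpl. split; [auto|split; [|split]].
  - intro b. rewrite (E b), (E (act y b)). unfold cohen_map.
    rewrite !act_addl, !act_scall, <- act_assoc.
    destruct Hw as [Wa [Ws _]]. rewrite !Wa, !Ws.
    apply Cx_ext; simpl; unfold rr; ring.
  - set (d := fun b => Csub (w b) (w (act f b))).
    assert (Hdb : dual_bound B d (Lam * rr ^ k)).
    { apply (neumann_bound (fun b => Csub (x b) (x (act f b))) d f); auto.
      - replace d with (fadd w (fsc (-1) (dact w f))).
        apply is_dual_fadd; auto. apply is_dual_fsc, dact_is_dual; auto.
        unfold d, Csub. fx; unfold dual_act, adj1; ring.
      - intro b. unfold d, cohen_map. rewrite (E b), (E (act f b)). unfold cohen_map, Csub.
        apply Cx_ext; simpl; ring.
      - replace (fun b => Csub (x b) (x (act f b))) with (fadd x (fsc (-1) (dact x f))); auto.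
        unfold Csub. fx; unfold dual_act, adj1; ring. }
    intro b. replace (Csub (w b) (x b)) with (Cmul (mkC cc 0) (d b)).
    + rewrite Cabs_scal_real by lra. rewrite Rmult_assoc. apply Rmult_le_compat_l. lra. apply Hdb.
    + unfold d. rewrite (E b). unfold cohen_map, Csub. apply Cx_ext; simpl; ring.
  - rewrite vaffine_sub by (unfold rr; ring).
    eapply Rle_trans. apply vnorm_triangle. rewrite !vnorm_scal_real.
    rewrite !Rabs_pos_eq by (try apply Rmult_le_pos; lra).
    pose proof (vnorm_nonneg _ f).
    assert (cc * vnorm (vadd (amul f y) (vopp y)) <= cc * rr ^ k) by (apply Rmult_le_compat_l; lra).
    assert (cc * rr ^ k * vnorm f <= cc * rr ^ k * K) by (apply Rmult_le_compat_l; nra).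
    nra.
Qed.

Definition cohen_next (k : nat) (s : (B -> Cx) * A) : (B -> Cx) * A :=
  match excluded_middle_informative (is_dual B (fst s)) with
  | left H => proj1_sig (constructive_indefinite_description _ (cohen_step (fst s) (snd s) k H))
  | right _ => s end.

Fixpoint cohen_seq (x0 : B -> Cx) (k : nat) : (B -> Cx) * A :=
  match k with O => (x0, vzero) | S m => cohen_next m (cohen_seq x0 m) end.

Lemma cohen_next_spec k s : is_dual B (fst s) ->
  is_dual B (fst (cohen_next k s)) /\
  (forall b, Cadd (Cmul (mkC (rr ^ k) 0) (fst s b)) (fst s (act (snd s) b)) =
             Cadd (Cmul (mkC (rr ^ S k) 0) (fst (cohen_next k s) b))
                  (fst (cohen_next k s) (act (snd (cohen_next k s)) b))) /\
  dual_bound B (fun b => Csub (fst (cohen_next k s) b) (fst s b)) (cc * (Lam * rr ^ k)) /\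
  vnorm (vadd (snd (cohen_next k s)) (vopp (snd s))) <= cc * (1 + K) * rr ^ k.
Proof.
  intro H. unfold cohen_next. destruct excluded_middle_informative as [H'|H']; [|contradiction].
  apply (proj2_sig (constructive_indefinite_description _ (cohen_step (fst s) (snd s) k H'))).
Qed.

Lemma cohen_seq_spec x0 : is_dual B x0 -> forall k, is_dual B (fst (cohen_seq x0 k)) /\
  (forall b, x0 b = Cadd (Cmul (mkC (rr ^ k) 0) (fst (cohen_seq x0 k) b))
                         (fst (cohen_seq x0 k) (act (snd (cohen_seq x0 k)) b))).
Proof.
  intros Hx k. induction k as [|k [IH1 IH2]].
  - simpl. split; auto. intro b. rewrite act_zero, dual_0 by auto.
    apply Cx_ext; simpl; unfold C0; simpl; ring.
  - destruct (cohen_next_spec k (cohen_seq x0 k) IH1) as [H1 [H2 _]]. simpl cohen_seq. split; auto.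
    intro b. rewrite <- H2. auto.
Qed.

Lemma cohen_seq_increment x0 : is_dual B x0 -> forall k,
  dual_bound B (fun b => Csub (fst (cohen_seq x0 (S k)) b) (fst (cohen_seq x0 k) b)) ((cc * Lam) * rr ^ k) /\
  vnorm (vadd (snd (cohen_seq x0 k)) (vopp (snd (cohen_seq x0 (S k))))) <= cc * (1 + K) * rr ^ k.
Proof.
  intros Hx k. destruct (cohen_seq_spec x0 Hx k) as [H1 _].
  destruct (cohen_next_spec k (cohen_seq x0 k) H1) as [_ [_ [H3 H4]]]. simpl cohen_seq.
  rewrite Rmult_assoc, vnorm_sub_sym. auto.
Qed.

Lemma factor_limit (x : nat -> B -> Cx) (y : nat -> A) (xinf x0 : B -> Cx) (a : A) r M Y :
  0 <= r < 1 -> 0 <= M -> is_dual B xinf ->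
  (forall k, dual_bound B (fun b => Csub (xinf b) (x k b)) (M * r ^ k)) ->
  (forall k, vnorm (y k) <= Y) ->
  (forall eps, 0 < eps -> exists N, forall n, (N <= n)%nat -> vnorm (vadd (y n) (vopp a)) < eps) ->
  (forall k b, x0 b = Cadd (Cmul (mkC (r ^ k) 0) (x k b)) (x k (act (y k) b))) ->
  forall b, x0 b = xinf (act a b).
Proof.
  intros Hr HM Hxinf Htail HY Hya Hdec b.
  destruct (dual_bound_exists _ xinf Hxinf) as [Xi [HXi BXi]].
  assert (HYp : 0 <= Y) by (eapply Rle_trans; [apply vnorm_nonneg | apply (HY 0%nat)]).
  apply Cx_close. intros eps He.
  set (nb := vnorm b). assert (Hnb : 0 <= nb) by apply vnorm_nonneg.
  set (Mt := (Xi + M) * nb + M * Y * nb + Xi * nb + 1).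
  assert (HMt : 1 <= Mt) by (unfold Mt; assert (0 <= M * Y) by nra; nra).
  set (dl := eps / Mt). assert (Hdl : 0 < dl) by (unfold dl; apply Rdiv_lt_0_compat; lra).
  destruct (pow_lt_eps r dl Hr Hdl) as [N1 HN1].
  destruct (Hya dl Hdl) as [N2 HN2].
  set (k := max N1 N2). specialize (HN1 k ltac:(lia)). specialize (HN2 k ltac:(lia)).
  pose proof (pow_unit_interval r k ltac:(lra)) as Hrk.
  rewrite (Hdec k b).
  assert (Hk1 : Cabs (x k b) <= (Xi + M) * nb).
  { eapply Rle_trans. apply (dual_bound_of_sub B xinf (x k) Xi (M * r ^ k)); auto.
    - intro b'. rewrite Csub_sym. apply Htail.
    - apply Rmult_le_compat_r; auto. apply Rplus_le_compat_l.
      rewrite <- (Rmult_1_r M) at 2. apply Rmult_le_compat_l; lra. }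
  assert (Hk2 : Cabs (Csub (x k (act (y k) b)) (xinf (act (y k) b))) <= M * dl * (Y * nb)).
  { rewrite Csub_sym. eapply Rle_trans. apply Htail.
    assert (vnorm (act (y k) b) <= Y * nb).
    { eapply Rle_trans. apply act_norm. apply Rmult_le_compat_r; auto. }
    pose proof (vnorm_nonneg _ (act (y k) b)).
    apply Rmult_le_compat; try nra. }
  assert (Hk3 : Cabs (Csub (xinf (act (y k) b)) (xinf (act a b))) <= Xi * (dl * nb)).
  { eapply Rle_trans. apply dact_lipschitz; eauto.
    apply Rmult_le_compat_l; auto. apply Rmult_le_compat_r; auto. lra. }
  replace (Csub (Cadd (Cmul (mkC (r ^ k) 0) (x k b)) (x k (act (y k) b))) (xinf (act a b))) with
    (Cadd (Cmul (mkC (r ^ k) 0) (x k b))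
      (Cadd (Csub (x k (act (y k) b)) (xinf (act (y k) b))) (Csub (xinf (act (y k) b)) (xinf (act a b)))))
    by (unfold Csub; cx).
  eapply Rle_trans. apply Cabs_triangle. eapply Rle_trans. apply Rplus_le_compat_l. apply Cabs_triangle.
  rewrite Cabs_scal_real by lra.
  assert (r ^ k * Cabs (x k b) <= dl * ((Xi + M) * nb)).
  { apply Rmult_le_compat; try lra. apply Cabs_nonneg. }
  assert (dl * Mt = eps) by (unfold dl; field; lra).
  unfold Mt in H0. nra.
Qed.

Lemma cohen_factor x0 : is_dual B x0 -> exists c' a, is_dual B c' /\ forall b, x0 b = dact c' a b.
Proof.
  intros Hx. destruct cc_facts as [c1 [c2 [c3 c4]]]. pose proof rr_facts as Hrr.
  set (xs := fun k => fst (cohen_seq x0 k)). set (ys := fun k => snd (cohen_seq x0 k)).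
  assert (Hr : 0 <= rr < 1) by lra.
  assert (HC : 0 <= cc * Lam) by nra.
  assert (HC' : 0 <= cc * (1 + K)) by nra.
  set (xinf := dlim B xs (cc * Lam) rr Hr HC (fun n => proj1 (cohen_seq_increment x0 Hx n))).
  destruct (vgeometric_limit A ys (cc * (1 + K)) rr Hr HC') as [HY [a Ha]].
  { intro n. apply (cohen_seq_increment x0 Hx n). }
  exists xinf, a. split. { apply dlim_dual. intro n; apply cohen_seq_spec; auto. }
  apply (factor_limit xs ys xinf x0 a rr (cc * Lam / (1 - rr)) (cc * (1 + K) / (1 - rr))); auto.
  - apply Rdiv_le_0_compat; lra.
  - apply dlim_dual. intro n; apply cohen_seq_spec; auto.
  - intro k. replace (cc * Lam / (1 - rr) * rr ^ k) with (cc * Lam * rr ^ k / (1 - rr)) by (field; lra).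
    apply dlim_tail.
  - intro k. specialize (HY k). rewrite vnorm_sub_sym in HY.
    change (ys 0%nat) with (@vzero A) in HY. rewrite vopp_0, vadd_0 in HY. exact HY.
  - intro k; apply cohen_seq_spec; auto.
Qed.

End ApproximateIdentity.

Lemma factor_trivial_module (b' : B -> Cx) : ~ (exists b : B, 0 < vnorm b) ->
  is_dual B b' -> exists c' a, is_dual B c' /\ forall b, b' b = dact c' a b.
Proof.
  intros Bt Hb'. assert (Hz : forall b : B, b = vzero).
  { intro b. apply vnorm_eq0. pose proof (vnorm_nonneg _ b).
    destruct (Rle_or_lt (vnorm b) 0). lra. exfalso; apply Bt; eauto. }
  exists b', vzero. split; auto. intro b. unfold dual_act, adj1.
  rewrite (Hz b), (Hz (act _ _)). reflexivity.
Qed.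

End Main.

Theorem mainTheorem12 (A : BanachAlgebra) (B : BanachLeftModule A) :
  has_bounded_left_approx_identity A B ->
  (* wap_l(B) = B^* *)
  (forall b' : B -> Cx, is_dual B b' <-> in_wap_l A B b') ->
  (* B^* A = B^* *)
  (forall (c' : B -> Cx) (a : A), is_dual B c' -> is_dual B (dual_act A B c' a)) /\
  (forall b' : B -> Cx, is_dual B b' ->
     exists (c' : B -> Cx) (a : A), is_dual B c' /\
       forall b : B, b' b = dual_act A B c' a b).
Proof.
  intros [I [le [e [[i0 _] [Hrefl [Htrans [Hdir [[M HM] [HeA HeB]]]]]]]]] Hwap. split.
  - intros c' a Hc. apply dact_is_dual; auto.
  - intros b' Hb'. destruct (classic (exists b : B, 0 < vnorm b)) as [Bnt|Bt].
    + apply (cohen_factor A B I le e i0 Hrefl Htrans Hdir (Rabs M + 1)); auto.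
      * pose proof (Rabs_pos M); lra.
      * intro i. pose proof (HM i). pose proof (RRle_abs M). lra.
      * intros z Hz. apply Hwap; auto.
    + apply factor_trivial_module; auto.
Qed.
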